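(* Let $0<a<b<1$. There exist $c_1,c_2,c_3,c_4,R_0>0$ such that for every $R\ge R_0$ there exists a family $(F_\alpha)_{\alpha\in A}$ of $C^2$ diffeomorphisms onto their images $F_\alpha:\mathbb{R}\times[-R^a,2R^a]\to\mathbb{R}^2$ with $F_\alpha(0)=0$, satisfying: 1. $|A|\ge\exp(c_1R^{1-b})$; 2. for any distinct $\alpha,\alpha'\in A$, either there is a continuous path contained in $F_\alpha([0,R]\times\{0\})\cap F_{\alpha'}([0,R]\times[0,R^a])$ going from $0$ to $F_{\alpha'}([0,R]\times\{R^a\})$, or the same holds with $\alpha$ and $\alpha'$ interchanged; 3. for every $\alpha\in A$ and $x\in\mathbb{R}\times[-R^a,2R^a]$: (i) $|d^2_xF_\alpha|\le c_2R^{2(a-b)}$; (ii) there is $J^\alpha_x\in O(2)$ with $|d_xF_\alpha-J^\alpha_x|\le c_3R^{2(a-b)}$; (iii) for every $y\in\mathbb{R}\times[-R^a,2R^a]$, $|x-y|/c_4\le|F_\alpha(x)-F_\alpha(y)|\le c_4|x-y|$. *)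

From Stdlib Require Import Reals Lra.
From Coquelicot Require Import Coquelicot.
Open Scope R_scope.

Definition pt := (R * R)%type.

Definition enorm (p : pt) : R := sqrt (fst p ^ 2 + snd p ^ 2).
Definition edist (p q : pt) : R := enorm (fst p - fst q, snd p - snd q).

Definition strip (lo hi : R) (p : pt) : Prop := lo <= snd p <= hi.

Definition rect (x0 x1 y0 y1 : R) (p : pt) : Prop :=
  x0 <= fst p <= x1 /\ y0 <= snd p <= y1.

Definition img (F : pt -> pt) (S : pt -> Prop) (q : pt) : Prop :=
  exists p, S p /\ F p = q.

Definition is_open (U : pt -> Prop) : Prop :=
  forall p, U p -> exists e, 0 < e /\ forall q, edist q p < e -> U q.

Definition cont_at (g : pt -> R) (p : pt) : Prop :=
  forall eps, 0 < eps -> exists del, 0 < del /\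
    forall q, edist q p < del -> Rabs (g q - g p) < eps.

Definition d1 (g : pt -> R) (p : pt) : R := Derive (fun t => g (t, snd p)) (fst p).
Definition d2 (g : pt -> R) (p : pt) : R := Derive (fun t => g (fst p, t)) (snd p).

Definition C1_on (U : pt -> Prop) (g : pt -> R) : Prop :=
  forall p, U p ->
    ex_derive (fun t => g (t, snd p)) (fst p) /\
    ex_derive (fun t => g (fst p, t)) (snd p) /\
    cont_at (d1 g) p /\ cont_at (d2 g) p.

Definition C2_on (U : pt -> Prop) (g : pt -> R) : Prop :=
  C1_on U g /\ C1_on U (d1 g) /\ C1_on U (d2 g).

Definition comp1 (F : pt -> pt) : pt -> R := fun p => fst (F p).
Definition comp2 (F : pt -> pt) : pt -> R := fun p => snd (F p).

(* F is C^2 on a (not necessarily open) set S: it is C^2 on an open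
   neighbourhood of S. *)
Definition C2_near (S : pt -> Prop) (F : pt -> pt) : Prop :=
  exists U, is_open U /\ (forall p, S p -> U p) /\
    C2_on U (comp1 F) /\ C2_on U (comp2 F).

Definition C2_diffeo_onto_image (S : pt -> Prop) (F : pt -> pt) : Prop :=
  C2_near S F /\
  exists G : pt -> pt,
    (forall p, S p -> G (F p) = p) /\ C2_near (img F S) G.

Record mat2 := Mat2 { m11 : R; m12 : R; m21 : R; m22 : R }.

(* J in O(2): J^T J = I. *)
Definition in_O2 (J : mat2) : Prop :=
  m11 J * m11 J + m21 J * m21 J = 1 /\
  m12 J * m12 J + m22 J * m22 J = 1 /\
  m11 J * m12 J + m21 J * m22 J = 0.

Definition jac (F : pt -> pt) (x : pt) : mat2 :=
  Mat2 (d1 (comp1 F) x) (d2 (comp1 F) x) (d1 (comp2 F) x) (d2 (comp2 F) x).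

Definition mnorm (M : mat2) : R :=
  sqrt (m11 M ^ 2 + m12 M ^ 2 + m21 M ^ 2 + m22 M ^ 2).
Definition mdiff (M N : mat2) : mat2 :=
  Mat2 (m11 M - m11 N) (m12 M - m12 N) (m21 M - m21 N) (m22 M - m22 N).

(* Norm of the second differential d^2_x F (Euclidean norm of the
   tensor of all second-order partial derivatives). *)
Definition hess_sq (g : pt -> R) (x : pt) : R :=
  d1 (d1 g) x ^ 2 + d2 (d1 g) x ^ 2 + d1 (d2 g) x ^ 2 + d2 (d2 g) x ^ 2.
Definition d2norm (F : pt -> pt) (x : pt) : R :=
  sqrt (hess_sq (comp1 F) x + hess_sq (comp2 F) x).

Definition path_from0_to (P Q : pt -> Prop) : Prop :=
  exists gam : R -> pt,
    (forall t, 0 <= t <= 1 -> forall eps, 0 < eps -> exists del, 0 < del /\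
        forall s, 0 <= s <= 1 -> Rabs (s - t) < del -> edist (gam s) (gam t) < eps) /\
    (forall t, 0 <= t <= 1 -> P (gam t)) /\
    gam 0 = (0, 0) /\ Q (gam 1).

From Pilot Require Import Defs.
From Stdlib Require Import Reals.
From Coquelicot Require Import Coquelicot.
From Stdlib Require Import Lra Lia FunctionalExtensionality ClassicalEpsilon Classical.
Open Scope R_scope.

(* Put L := R^b and Ra := R^a, so that th := Ra / L = R^(a-b) is small.  For a
   C^3 profile h : R -> R with |h'| <= 3 th, |h''| <= 27 th / L, |h'''| <= 60 th / L^2
   consider the "bent map"
        F_h (x, y) := (x - chi(y) h'(x), y + h(x)),   chi(y) := y L^2 / (L^2 + y^2),
   which sends the horizontal line {y = 0} onto the graph of h and the vertical
   segments {x} x [0, .] approximately along the normals of that graph; chi ~ id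
   for |y| << L but stays bounded by L/2, which makes F_h globally invertible.
   Its inverse is built by solving  x - chi(v - h x) h'(x) = u  for x (strictly
   increasing in x) and is C^2 by implicit differentiation; on the strip
   |y| <= 2 Ra the map F_h is 2-bi-Lipschitz, its Hessian is O(th^2) and its
   Jacobian is O(th^2)-close to a rotation.

   The family is indexed by the integers i < 2^K, K := floor(R / L): the profile
   h_i is Ra times the sum of unit bumps placed on the intervals [kL, (k+1)L]
   for the bits k of i that are set.  If i and j first differ at bit k0, with
   the bit set in i, then the graphs of h_i and h_j agree up to k0 L and then the
   graph of h_i climbs to height Ra above the graph of h_j, which yields the
   crossing path of property 2.  Counting gives 2^K >= exp(ln 2 / 2 * R^(1-b)). *)

Ltac splits := repeat match goal with |- _ /\ _ => split end.

Lemma Rabs_le_sqrt (a b : R) : Rabs a <= sqrt (a ^ 2 + b ^ 2).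
Proof.
  rewrite <- sqrt_Rsqr_abs. apply sqrt_le_1_alt. unfold Rsqr. nra.
Qed.

Lemma sqrt_le_abs_sum (a b : R) : sqrt (a ^ 2 + b ^ 2) <= Rabs a + Rabs b.
Proof.
  rewrite <- (sqrt_Rsqr (Rabs a + Rabs b)) by (generalize (Rabs_pos a) (Rabs_pos b); lra).
  apply sqrt_le_1_alt. unfold Rsqr.
  rewrite <- (pow2_abs a), <- (pow2_abs b).
  generalize (Rabs_pos a) (Rabs_pos b); nra.
Qed.

Lemma edist_fst p q : Rabs (fst p - fst q) <= edist p q.
Proof. unfold edist, enorm; simpl. apply Rabs_le_sqrt. Qed.

Lemma edist_snd p q : Rabs (snd p - snd q) <= edist p q.
Proof. unfold edist, enorm; simpl. rewrite Rplus_comm. apply Rabs_le_sqrt. Qed.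

Lemma edist_le p q : edist p q <= Rabs (fst p - fst q) + Rabs (snd p - snd q).
Proof. unfold edist, enorm; simpl. apply sqrt_le_abs_sum. Qed.

Lemma enorm_triang a1 a2 b1 b2 :
  sqrt ((a1 + b1) ^ 2 + (a2 + b2) ^ 2) <= sqrt (a1 ^ 2 + a2 ^ 2) + sqrt (b1 ^ 2 + b2 ^ 2).
Proof.
  set (A := a1 ^ 2 + a2 ^ 2). set (B := b1 ^ 2 + b2 ^ 2).
  assert (HA : 0 <= A) by (unfold A; nra). assert (HB : 0 <= B) by (unfold B; nra).
  assert (HsA := sqrt_pos A). assert (HsB := sqrt_pos B).
  rewrite <- (sqrt_Rsqr (sqrt A + sqrt B)) by lra.
  apply sqrt_le_1_alt. unfold Rsqr.
  replace ((sqrt A + sqrt B) * (sqrt A + sqrt B)) with (A + B + 2 * (sqrt A * sqrt B))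
    by (rewrite <- (sqrt_sqrt A) at 1 by lra; rewrite <- (sqrt_sqrt B) at 1 by lra; ring).
  rewrite <- sqrt_mult by lra.
  assert (Cauchy_Schwarz : a1 * b1 + a2 * b2 <= sqrt (A * B)).
  { destruct (Rle_dec (a1 * b1 + a2 * b2) 0).
    - apply Rle_trans with 0; auto. apply sqrt_pos.
    - rewrite <- (sqrt_Rsqr (a1 * b1 + a2 * b2)) by lra. apply sqrt_le_1_alt.
      unfold Rsqr, A, B. pose proof (pow2_ge_0 (a1 * b2 - a2 * b1)). nra. }
  unfold A, B in *. nra.
Qed.

Lemma sq_le (a b : R) : Rabs a <= b -> a ^ 2 <= b ^ 2.
Proof. intros H. rewrite <- (pow2_abs a). apply pow_incr. split; auto. apply Rabs_pos. Qed.

Lemma sqrt_le_of_sq (A K : R) : A <= K ^ 2 -> 0 <= K -> sqrt A <= K.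
Proof. intros H HK. rewrite <- (sqrt_pow2 K HK). apply sqrt_le_1_alt. auto. Qed.

(* Continuity of a function of two reals, in coordinatewise epsilon-delta form
   (the ball of R * R in Coquelicot is the product of the balls). *)
Lemma continuous2_iff (f : R * R -> R) p : continuous f p <->
  (forall eps, 0 < eps -> exists del, 0 < del /\ forall q,
    Rabs (fst q - fst p) < del -> Rabs (snd q - snd p) < del -> Rabs (f q - f p) < eps).
Proof.
  split.
  - intros H eps Heps.
    destruct (proj1 (filterlim_locally f (f p)) H (mkposreal eps Heps)) as [d Hd].
    exists d. split; [apply cond_pos|]. intros q H1 H2. apply (Hd q). split; assumption.
  - intros H. apply (proj2 (filterlim_locally f (f p))). intros eps.
    destruct (H eps (cond_pos eps)) as [d [Hd H']].
    exists (mkposreal d Hd). intros q [H1 H2]. apply H'; assumption.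
Qed.

Lemma continuous_cont_at (g : pt -> R) p : continuous g p -> cont_at g p.
Proof.
  intros H eps Heps. destruct (proj1 (continuous2_iff g p) H eps Heps) as [d [Hd H']].
  exists d; split; auto. intros q Hq. apply H'.
  - eapply Rle_lt_trans; [apply edist_fst | exact Hq].
  - eapply Rle_lt_trans; [apply edist_snd | exact Hq].
Qed.

Lemma path_continuous (f g : R -> R) :
  (forall t, continuous f t) -> (forall t, continuous g t) ->
  forall t eps, 0 < eps -> exists del, 0 < del /\
    forall s, Rabs (s - t) < del -> edist (f s, g s) (f t, g t) < eps.
Proof.
  intros Hf Hg t eps Heps.
  assert (He2 : 0 < eps / 2) by lra.
  destruct (proj1 (filterlim_locally f (f t)) (Hf t) (mkposreal _ He2)) as [d1 H1].
  destruct (proj1 (filterlim_locally g (g t)) (Hg t) (mkposreal _ He2)) as [d2 H2].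
  exists (Rmin d1 d2). split; [apply Rmin_pos; apply cond_pos|].
  intros s Hs. eapply Rle_lt_trans; [apply edist_le|]. simpl.
  assert (A : Rabs (f s - f t) < eps / 2).
  { apply (H1 s). change (Rabs (s - t) < d1). eapply Rlt_le_trans; [exact Hs|apply Rmin_l]. }
  assert (B : Rabs (g s - g t) < eps / 2).
  { apply (H2 s). change (Rabs (s - t) < d2). eapply Rlt_le_trans; [exact Hs|apply Rmin_r]. }
  lra.
Qed.

(* Coquelicot's rules, restated with the real operations +, -, * instead of the
   generic plus/scal, so that they apply syntactically. *)
Lemma d_plus f g x df dg : is_derive f x df -> is_derive g x dg ->
  is_derive (fun t => f t + g t) x (df + dg).
Proof. intros. apply (is_derive_plus f g); auto. Qed.
Lemma d_sub f g x df dg : is_derive f x df -> is_derive g x dg ->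
  is_derive (fun t => f t - g t) x (df - dg).
Proof. intros. apply (is_derive_minus f g); auto. Qed.
Lemma d_mult f g x df dg : is_derive f x df -> is_derive g x dg ->
  is_derive (fun t => f t * g t) x (df * g x + f x * dg).
Proof. intros. apply (is_derive_mult f g); auto. intros; apply Rmult_comm. Qed.
Lemma d_cmul (c : R) f x df : is_derive f x df -> is_derive (fun t => c * f t) x (c * df).
Proof. intros. apply (is_derive_scal f); auto. Qed.
Lemma d_comp (f g : R -> R) x df dg : is_derive f (g x) df -> is_derive g x dg ->
  is_derive (fun t => f (g t)) x (dg * df).
Proof. intros. apply (is_derive_comp f g); auto. Qed.
Lemma d_inv f x df : is_derive f x df -> f x <> 0 ->
  is_derive (fun t => / f t) x (- df / (f x) ^ 2).
Proof. intros H Hn. apply (is_derive_inv f); auto. Qed.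
Lemma d_const (c x : R) : is_derive (fun _ => c) x 0.
Proof. apply (is_derive_const c x). Qed.
Lemma d_id (x : R) : is_derive (fun t => t) x 1.
Proof. apply (is_derive_id x). Qed.
Lemma d_eq (f : R -> R) (x l1 l2 : R) : is_derive f x l1 -> l1 = l2 -> is_derive f x l2.
Proof. intros H E; subst; auto. Qed.

Lemma cont_of_d (f f' : R -> R) x : is_derive f x (f' x) -> continuous f x.
Proof. intros H. apply (ex_derive_continuous f). exists (f' x). exact H. Qed.

Lemma mvt_exists (f f' : R -> R) a b :
  (forall t, is_derive f t (f' t)) ->
  exists z, Rmin a b <= z <= Rmax a b /\ f b - f a = f' z * (b - a).
Proof.
  intros Hd. destruct (MVT_gen f a b f') as [z [Hz Heq]].
  - intros; apply Hd.
  - intros x _. apply continuity_pt_filterlim. apply (cont_of_d f f'). apply Hd.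
  - exists z; auto.
Qed.

Lemma mvt_lower (f f' : R -> R) c a b :
  (forall t, is_derive f t (f' t)) -> (forall t, c <= f' t) -> a <= b ->
  c * (b - a) <= f b - f a.
Proof.
  intros Hd Hc Hab. destruct (mvt_exists f f' a b Hd) as [z [_ ->]].
  apply Rmult_le_compat_r; [lra|apply Hc].
Qed.

Lemma mvt_bound (f f' : R -> R) B a b :
  (forall t, is_derive f t (f' t)) -> (forall t, Rabs (f' t) <= B) ->
  Rabs (f b - f a) <= B * Rabs (b - a).
Proof. intros Hd Hb. apply (bounded_variation f f'). intros; split; auto. Qed.

Lemma locally_interval (a b t : R) : a < t < b -> locally t (fun y => a < y < b).
Proof.
  intros [H1 H2]. assert (Hd : 0 < Rmin (t - a) (b - t)) by (apply Rmin_pos; lra).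
  exists (mkposreal _ Hd). intros y Hy. simpl in Hy.
  change (Rabs (y - t) < Rmin (t - a) (b - t)) in Hy.
  apply Rabs_def2 in Hy. generalize (Rmin_l (t - a) (b - t)) (Rmin_r (t - a) (b - t)). lra.
Qed.

(** * A C^3 smooth step *)

Definition glue (c : R) (g k : R -> R) (t : R) : R := if Rle_dec t c then g t else k t.

Lemma glue_left c g k t : t <= c -> glue c g k t = g t.
Proof. intros H. unfold glue. destruct (Rle_dec t c); [reflexivity|lra]. Qed.
Lemma glue_right c g k t : c < t -> glue c g k t = k t.
Proof. intros H. unfold glue. destruct (Rle_dec t c); [lra|reflexivity]. Qed.

Lemma glue_locally_left c g k t : t < c -> locally t (fun y => glue c g k y = g y).
Proof.
  intros H. apply (filter_imp (fun y => t - 1 < y < c)); [|apply locally_interval; lra].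
  intros y Hy. apply glue_left; lra.
Qed.
Lemma glue_locally_right c g k t : c < t -> locally t (fun y => glue c g k y = k y).
Proof.
  intros H. apply (filter_imp (fun y => c < y < t + 1)); [|apply locally_interval; lra].
  intros y Hy. apply glue_right; lra.
Qed.

Lemma glue_derive_at c g k d : g c = k c -> is_derive g c d -> is_derive k c d ->
  is_derive (glue c g k) c d.
Proof.
  intros Hgk Dg Dk. apply is_derive_Reals. apply is_derive_Reals in Dg, Dk.
  intros eps Heps. destruct (Dg eps Heps) as [d1 H1]. destruct (Dk eps Heps) as [d2 H2].
  exists (mkposreal _ (Rmin_pos _ _ (cond_pos d1) (cond_pos d2))). intros hh Hh0 Hh. simpl in Hh.
  assert (Hc : glue c g k c = g c) by (apply glue_left; lra).
  destruct (Rle_or_lt hh 0) as [Hn | Hp].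
  - rewrite Hc, glue_left by lra. apply H1; auto. eapply Rlt_le_trans; [exact Hh|apply Rmin_l].
  - rewrite Hc, Hgk, glue_right by lra. apply H2; auto.
    eapply Rlt_le_trans; [exact Hh|apply Rmin_r].
Qed.

Lemma glue_is_derive c g k g' k' :
  (forall t, is_derive g t (g' t)) -> (forall t, is_derive k t (k' t)) ->
  g c = k c -> g' c = k' c ->
  forall t, is_derive (glue c g k) t (glue c g' k' t).
Proof.
  intros Hg Hk E E' t.
  destruct (Rtotal_order t c) as [Hlt | [-> | Hgt]].
  - rewrite glue_left by lra. apply (is_derive_ext_loc g); [|apply Hg].
    apply (filter_imp (fun y => glue c g k y = g y)); [auto|apply glue_locally_left; lra].
  - rewrite glue_left by lra. apply glue_derive_at; auto. rewrite E'. apply Hk.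
  - rewrite glue_right by lra. apply (is_derive_ext_loc k); [|apply Hk].
    apply (filter_imp (fun y => glue c g k y = k y)); [auto|apply glue_locally_right; lra].
Qed.

Lemma glue_continuous c g k :
  (forall t, continuous g t) -> (forall t, continuous k t) -> g c = k c ->
  forall t, continuous (glue c g k) t.
Proof.
  intros Hg Hk E t.
  destruct (Rtotal_order t c) as [Hlt | [-> | Hgt]].
  - apply (continuous_ext_loc _ g); [|apply Hg].
    apply (filter_imp (fun y => glue c g k y = g y)); [auto|apply glue_locally_left; lra].
  - apply (proj2 (filterlim_locally _ _)). intros eps.
    destruct (proj1 (filterlim_locally g (g c)) (Hg c) eps) as [d1 H1].
    destruct (proj1 (filterlim_locally k (k c)) (Hk c) eps) as [d2 H2].
    exists (mkposreal _ (Rmin_pos _ _ (cond_pos d1) (cond_pos d2))). intros y Hy.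
    change (Rabs (y - c) < Rmin d1 d2) in Hy.
    rewrite (glue_left c g k c) by lra.
    destruct (Rle_or_lt y c).
    + rewrite glue_left by lra. apply H1.
      change (Rabs (y - c) < d1). eapply Rlt_le_trans; [exact Hy|apply Rmin_l].
    + rewrite glue_right by lra. rewrite E. apply H2.
      change (Rabs (y - c) < d2). eapply Rlt_le_trans; [exact Hy|apply Rmin_r].
  - apply (continuous_ext_loc _ k); [|apply Hk].
    apply (filter_imp (fun y => glue c g k y = k y)); [auto|apply glue_locally_right; lra].
Qed.

Definition cutoff (P : R -> R) (B : R) : R -> R :=
  glue 0 (fun _ => 0) (glue 1 P (fun _ => B)).

Lemma cutoff_left P B t : t <= 0 -> cutoff P B t = 0.
Proof. apply glue_left. Qed.
Lemma cutoff_right P B t : P 1 = B -> 1 <= t -> cutoff P B t = B.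
Proof.
  intros E H. unfold cutoff. rewrite glue_right by lra.
  destruct (Req_dec t 1) as [->|Hne]; [rewrite glue_left by lra; auto|].
  apply glue_right; lra.
Qed.
Lemma cutoff_inside P B t : 0 < t <= 1 -> cutoff P B t = P t.
Proof. intros H. unfold cutoff. rewrite glue_right by lra. apply glue_left; lra. Qed.

Lemma cutoff_is_derive P P' B :
  (forall x, is_derive P x (P' x)) -> P 0 = 0 -> P 1 = B -> P' 0 = 0 -> P' 1 = 0 ->
  forall t, is_derive (cutoff P B) t (cutoff P' 0 t).
Proof.
  intros HD H0 H1 H0' H1'. apply glue_is_derive.
  - intros; apply d_const.
  - apply glue_is_derive; auto. intros; apply d_const.
  - rewrite glue_left by lra. auto.
  - rewrite glue_left by lra. auto.
Qed.

Lemma cutoff_continuous P : (forall x, continuous P x) -> P 0 = 0 -> P 1 = 0 ->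
  forall t, continuous (cutoff P 0) t.
Proof.
  intros HC H0 H1. apply glue_continuous.
  - intros; apply continuous_const.
  - apply glue_continuous; auto. intros; apply continuous_const.
  - rewrite glue_left by lra. auto.
Qed.

Lemma cutoff_bound P A t : 0 <= A -> (forall x, 0 < x < 1 -> Rabs (P x) <= A) ->
  P 1 = 0 -> Rabs (cutoff P 0 t) <= A.
Proof.
  intros HA HP H1.
  destruct (Rle_or_lt t 0) as [Hn|Hp]; [rewrite cutoff_left, Rabs_R0; auto|].
  destruct (Rle_or_lt 1 t) as [Hg|Hl]; [rewrite cutoff_right, Rabs_R0; auto|].
  rewrite cutoff_inside by lra. apply HP; lra.
Qed.

Lemma cutoff_outside P t : P 1 = 0 -> t <= 0 \/ 1 <= t -> cutoff P 0 t = 0.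
Proof. intros E [H|H]; [apply cutoff_left | apply cutoff_right]; auto. Qed.

(* The smoothstep polynomial 35t^4 - 84t^5 + 70t^6 - 20t^7 and its derivatives,
   written with q(t) = t (1 - t); it is flat to third order at 0 and 1. *)
Definition qq (t : R) := t * (1 - t).
Definition p0 (t : R) := 35 * t ^ 4 - 84 * t ^ 5 + 70 * t ^ 6 - 20 * t ^ 7.
Definition p1 (t : R) := 140 * qq t ^ 3.
Definition p2 (t : R) := 420 * qq t ^ 2 * (1 - 2 * t).
Definition p3 (t : R) := 840 * qq t * (1 - 5 * qq t).

Definition s0 := cutoff p0 1.
Definition s1 := cutoff p1 0.
Definition s2 := cutoff p2 0.
Definition s3 := cutoff p3 0.

Lemma s0_d t : is_derive s0 t (s1 t).
Proof.
  apply cutoff_is_derive; unfold p0, p1, qq; [intros x; auto_derive; auto; ring| ..];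
    simpl; ring.
Qed.
Lemma s1_d t : is_derive s1 t (s2 t).
Proof.
  apply cutoff_is_derive; unfold p1, p2, qq; [intros x; auto_derive; auto; ring| ..];
    simpl; ring.
Qed.
Lemma s2_d t : is_derive s2 t (s3 t).
Proof.
  apply cutoff_is_derive; unfold p2, p3, qq; [intros x; auto_derive; auto; ring| ..];
    simpl; ring.
Qed.
Lemma s3_c t : continuous s3 t.
Proof.
  apply cutoff_continuous; unfold p3, qq; [|simpl; ring ..].
  intros x. apply (ex_derive_continuous (fun x => 840 * (x * (1 - x)) * (1 - 5 * (x * (1 - x))))).
  auto_derive; auto.
Qed.

Lemma qq_bnd t : 0 < t < 1 -> 0 <= qq t <= 1/4.
Proof. intros. unfold qq. split; [apply Rmult_le_pos; lra|]. pose proof (pow2_ge_0 (t - 1/2)). nra. Qed.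

Lemma s0_neg t : t <= 0 -> s0 t = 0.
Proof. apply cutoff_left. Qed.
Lemma s0_one t : 1 <= t -> s0 t = 1.
Proof. apply cutoff_right. unfold p0. ring. Qed.

Lemma s0_bnd t : 0 <= s0 t <= 1.
Proof.
  destruct (Rle_or_lt t 0) as [Hn|Hp]; [rewrite s0_neg; lra|].
  destruct (Rle_or_lt 1 t) as [Hg|Hl]; [rewrite s0_one; lra|].
  unfold s0. rewrite cutoff_inside by lra.
  assert (E1 : p0 t = t^4 * (1 + 4*(1-t) + 10*(1-t)^2 + 20*(1-t)^3)) by (unfold p0; ring).
  assert (E2 : 1 - p0 t = (1-t)^4 * (1 + 4*t + 10*t^2 + 20*t^3)) by (unfold p0; ring).
  assert (0 <= (1-t)^2) by (apply pow_le; lra). assert (0 <= (1-t)^3) by (apply pow_le; lra).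
  assert (0 <= t^2) by (apply pow_le; lra). assert (0 <= t^3) by (apply pow_le; lra).
  assert (0 <= t^4) by (apply pow_le; lra). assert (0 <= (1-t)^4) by (apply pow_le; lra).
  split; [rewrite E1 | assert (0 <= 1 - p0 t) by (rewrite E2; apply Rmult_le_pos; lra)];
    try apply Rmult_le_pos; lra.
Qed.

Lemma s1_bnd t : Rabs (s1 t) <= 3.
Proof.
  apply cutoff_bound; [lra| |unfold p1, qq; ring].
  intros x Hx. destruct (qq_bnd x Hx). unfold p1. rewrite Rabs_pos_eq.
  - assert (qq x ^ 3 <= (1/4)^3) by (apply pow_incr; lra). lra.
  - apply Rmult_le_pos; [lra|]. apply pow_le; lra.
Qed.

Lemma s2_bnd t : Rabs (s2 t) <= 27.
Proof.
  apply cutoff_bound; [lra| |unfold p2, qq; ring].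
  intros x Hx. destruct (qq_bnd x Hx). unfold p2.
  assert (qq x ^ 2 <= (1/4)^2) by (apply pow_incr; lra).
  assert (0 <= qq x ^ 2) by (apply pow_le; lra).
  rewrite Rabs_mult, (Rabs_pos_eq (420 * _)) by lra.
  assert (Rabs (1 - 2 * x) <= 1) by (apply Rabs_le; lra).
  assert (Rabs (1 - 2 * x) >= 0) by (apply Rle_ge, Rabs_pos). nra.
Qed.

Lemma s3_bnd t : Rabs (s3 t) <= 60.
Proof.
  apply cutoff_bound; [lra| |unfold p3, qq; ring].
  intros x Hx. destruct (qq_bnd x Hx). unfold p3. apply Rabs_le. nra.
Qed.

Lemma s1_out t : t <= 0 \/ 1 <= t -> s1 t = 0.
Proof. apply cutoff_outside. unfold p1, qq. ring. Qed.
Lemma s2_out t : t <= 0 \/ 1 <= t -> s2 t = 0.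
Proof. apply cutoff_outside. unfold p2, qq. ring. Qed.
Lemma s3_out t : t <= 0 \/ 1 <= t -> s3 t = 0.
Proof. apply cutoff_outside. unfold p3, qq. ring. Qed.

Definition jcont (E : R -> R -> R) := forall x v,
  continuous (fun p : R * R => E (fst p) (snd p)) (x, v).

Lemma jcont_at (E : R -> R -> R) p : jcont E -> continuous (fun p : R * R => E (fst p) (snd p)) p.
Proof. intros H. destruct p. apply H. Qed.

Lemma jc_plus E F : jcont E -> jcont F -> jcont (fun x v => E x v + F x v).
Proof. intros HE HF x v. apply (continuous_plus (fun p : R * R => E (fst p) (snd p)) (fun p : R * R => F (fst p) (snd p))); auto. Qed.
Lemma jc_mult E F : jcont E -> jcont F -> jcont (fun x v => E x v * F x v).
Proof. intros HE HF x v. apply (continuous_mult (fun p : R * R => E (fst p) (snd p)) (fun p : R * R => F (fst p) (snd p))); auto. Qed.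
Lemma jc_opp E : jcont E -> jcont (fun x v => - E x v).
Proof. intros HE x v. apply (continuous_opp (fun p : R * R => E (fst p) (snd p))); auto. Qed.
Lemma jc_const c : jcont (fun _ _ => c).
Proof. intros x v. apply continuous_const. Qed.
Lemma jc_x : jcont (fun x _ => x).
Proof. intros x v. apply continuous_fst. Qed.
Lemma jc_v : jcont (fun _ v => v).
Proof. intros x v. apply continuous_snd. Qed.
Lemma jc_comp (f : R -> R) E : (forall y, continuous f y) -> jcont E -> jcont (fun x v => f (E x v)).
Proof. intros Hf HE x v. apply (continuous_comp (fun p : R * R => E (fst p) (snd p)) f); auto. Qed.
Lemma jc_inv E : jcont E -> (forall x v, E x v <> 0) -> jcont (fun x v => / E x v).
Proof.
  intros HE Hn x v. apply (continuous_comp (fun p : R * R => E (fst p) (snd p)) Rinv); auto.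
  apply continuous_Rinv. apply Hn.
Qed.

Definition C1_xy (E : R -> R -> R) := exists Ex Ev : R -> R -> R,
  (forall x v, is_derive (fun t => E t v) x (Ex x v)) /\
  (forall x v, is_derive (fun t => E x t) v (Ev x v)) /\
  jcont E /\ jcont Ex /\ jcont Ev.

Definition C2_xy (E : R -> R -> R) := exists Ex Ev : R -> R -> R,
  (forall x v, is_derive (fun t => E t v) x (Ex x v)) /\
  (forall x v, is_derive (fun t => E x t) v (Ev x v)) /\
  jcont E /\ C1_xy Ex /\ C1_xy Ev.

Lemma C1_xy_jc E : C1_xy E -> jcont E.
Proof. intros (?&?&?&?&?&?&?); auto. Qed.

Lemma C1_xy_ext E F : C1_xy E -> (forall x v, E x v = F x v) -> C1_xy F.
Proof.
  intros H He. replace F with E; auto.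
  apply functional_extensionality; intros x; apply functional_extensionality; intros v; auto.
Qed.

Lemma C1_xy_const c : C1_xy (fun _ _ => c).
Proof. exists (fun _ _ => 0), (fun _ _ => 0). splits; intros; try apply d_const; apply jc_const. Qed.

Lemma C1_xy_fx (f f' : R -> R) : (forall x, is_derive f x (f' x)) -> (forall x, continuous f' x) ->
  C1_xy (fun x _ => f x).
Proof.
  intros Hd Hc. exists (fun x _ => f' x), (fun _ _ => 0). splits.
  - intros; apply Hd.
  - intros; apply d_const.
  - apply (jc_comp f (fun x _ => x)); [|apply jc_x]. intros y; apply (cont_of_d f f'); apply Hd.
  - apply (jc_comp f' (fun x _ => x)); [auto|apply jc_x].
  - apply jc_const.
Qed.

Lemma C1_xy_x : C1_xy (fun x _ => x).
Proof. apply (C1_xy_fx (fun x => x) (fun _ => 1)); intros; [apply d_id | apply continuous_const]. Qed.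

Lemma C1_xy_v : C1_xy (fun _ v => v).
Proof.
  exists (fun _ _ => 0), (fun _ _ => 1). splits; intros;
    [apply d_const | apply d_id | apply jc_v | apply jc_const | apply jc_const].
Qed.

Lemma C1_xy_plus E F : C1_xy E -> C1_xy F -> C1_xy (fun x v => E x v + F x v).
Proof.
  intros (Ex&Ev&H1&H2&H3&H4&H5) (Fx&Fv&G1&G2&G3&G4&G5).
  exists (fun x v => Ex x v + Fx x v), (fun x v => Ev x v + Fv x v). splits;
    try (apply jc_plus; auto); intros;
    [apply (d_plus (fun t => E t v) (fun t => F t v)) | apply (d_plus (fun t => E x t) (fun t => F x t))];
    auto.
Qed.

Lemma C1_xy_mult E F : C1_xy E -> C1_xy F -> C1_xy (fun x v => E x v * F x v).
Proof.
  intros (Ex&Ev&H1&H2&H3&H4&H5) (Fx&Fv&G1&G2&G3&G4&G5).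
  exists (fun x v => Ex x v * F x v + E x v * Fx x v), (fun x v => Ev x v * F x v + E x v * Fv x v).
  splits; try (apply jc_plus); try (apply jc_mult; auto); intros;
    [apply (d_mult (fun t => E t v) (fun t => F t v)) | apply (d_mult (fun t => E x t) (fun t => F x t))];
    auto.
Qed.

Lemma C1_xy_sub E F : C1_xy E -> C1_xy F -> C1_xy (fun x v => E x v - F x v).
Proof.
  intros HE HF. apply (C1_xy_ext (fun x v => E x v + (-1) * F x v)); [|intros; ring].
  apply C1_xy_plus; auto. apply C1_xy_mult; auto. apply C1_xy_const.
Qed.

Lemma C1_xy_opp E : C1_xy E -> C1_xy (fun x v => - E x v).
Proof.
  intros HE. apply (C1_xy_ext (fun x v => (-1) * E x v)); [|intros; ring].
  apply C1_xy_mult; auto. apply C1_xy_const.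
Qed.

Lemma C1_xy_comp (f f' : R -> R) E : (forall x, is_derive f x (f' x)) -> (forall x, continuous f' x) ->
  C1_xy E -> C1_xy (fun x v => f (E x v)).
Proof.
  intros Hd Hc (Ex&Ev&H1&H2&H3&H4&H5).
  exists (fun x v => Ex x v * f' (E x v)), (fun x v => Ev x v * f' (E x v)). splits.
  - intros; apply (d_comp f (fun t => E t v)); auto.
  - intros; apply (d_comp f (fun t => E x t)); auto.
  - apply jc_comp; auto. intros y; apply (cont_of_d f f'); apply Hd.
  - apply jc_mult; auto. apply jc_comp; auto.
  - apply jc_mult; auto. apply jc_comp; auto.
Qed.

Lemma C1_xy_inv E : C1_xy E -> (forall x v, E x v <> 0) -> C1_xy (fun x v => / E x v).
Proof.
  intros (Ex&Ev&H1&H2&H3&H4&H5) Hn.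
  assert (Hsq : jcont (fun x v => / E x v ^ 2)).
  { apply jc_inv; [|intros; apply pow_nonzero; auto].
    intros x v. apply (continuous_ext (fun p : R * R => E (fst p) (snd p) * E (fst p) (snd p)));
      [intros; simpl; ring|]. apply (jc_mult E E); auto. }
  exists (fun x v => - Ex x v * / (E x v ^ 2)), (fun x v => - Ev x v * / (E x v ^ 2)). splits.
  - intros; apply (d_inv (fun t => E t v)); auto.
  - intros; apply (d_inv (fun t => E x t)); auto.
  - apply jc_inv; auto.
  - apply jc_mult; auto. apply jc_opp; auto.
  - apply jc_mult; auto. apply jc_opp; auto.
Qed.

Definition C1_pt (g : pt -> R) := exists g1 g2 : pt -> R,
  (forall p, is_derive (fun t => g (t, snd p)) (fst p) (g1 p)) /\
  (forall p, is_derive (fun t => g (fst p, t)) (snd p) (g2 p)) /\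
  (forall p, continuous g p) /\
  (forall p, continuous g1 p) /\ (forall p, continuous g2 p).

Definition C2_pt (g : pt -> R) := exists g1 g2 : pt -> R,
  (forall p, is_derive (fun t => g (t, snd p)) (fst p) (g1 p)) /\
  (forall p, is_derive (fun t => g (fst p, t)) (snd p) (g2 p)) /\
  (forall p, continuous g p) /\
  C1_pt g1 /\ C1_pt g2.

Lemma d1_eq g g1 : (forall p, is_derive (fun t => g (t, snd p)) (fst p) (g1 p)) -> Defs.d1 g = g1.
Proof. intros H. apply functional_extensionality. intros p. apply is_derive_unique. apply H. Qed.
Lemma d2_eq g g2 : (forall p, is_derive (fun t => g (fst p, t)) (snd p) (g2 p)) -> Defs.d2 g = g2.
Proof. intros H. apply functional_extensionality. intros p. apply is_derive_unique. apply H. Qed.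

Lemma C1_pt_on U g : C1_pt g -> C1_on U g.
Proof.
  intros (g1&g2&H1&H2&H0&H3&H4) p _.
  rewrite (d1_eq g g1 H1), (d2_eq g g2 H2).
  split; [exists (g1 p); apply H1|]. split; [exists (g2 p); apply H2|].
  split; apply continuous_cont_at; auto.
Qed.

Lemma C2_pt_on U g : C2_pt g -> C2_on U g.
Proof.
  intros (g1&g2&H1&H2&H0&H3&H4). split; [|split].
  - apply C1_pt_on. exists g1, g2. destruct H3 as (?&?&?&?&?&?&?). destruct H4 as (?&?&?&?&?&?&?).
    splits; auto.
  - rewrite (d1_eq g g1 H1). apply C1_pt_on; auto.
  - rewrite (d2_eq g g2 H2). apply C1_pt_on; auto.
Qed.

Lemma C1_xy_pt E : C1_xy E -> C1_pt (fun p => E (fst p) (snd p)).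
Proof.
  intros (Ex&Ev&H1&H2&H3&H4&H5).
  exists (fun p => Ex (fst p) (snd p)), (fun p => Ev (fst p) (snd p)).
  splits; intros p; try apply jcont_at; auto; simpl; auto.
Qed.

Lemma C2_xy_pt E : C2_xy E -> C2_pt (fun p => E (fst p) (snd p)).
Proof.
  intros (Ex&Ev&H1&H2&H3&H4&H5).
  exists (fun p => Ex (fst p) (snd p)), (fun p => Ev (fst p) (snd p)).
  splits; try (intros p; apply jcont_at); auto; try apply C1_xy_pt; auto; intros p; simpl; auto.
Qed.

Lemma C2_near_global S (F : pt -> pt) :
  C2_pt (comp1 F) -> C2_pt (comp2 F) -> C2_near S F.
Proof.
  intros H1 H2. exists (fun _ => True). splits; auto; try apply C2_pt_on; auto.
  intros p _. exists 1; split; auto; lra.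
Qed.

(** * Chain rule and implicit differentiation *)

Lemma chain2 (E Ex Ev : R -> R -> R) (Y : R -> R) w y' :
  (forall x v, is_derive (fun t => E t v) x (Ex x v)) ->
  (forall x v, is_derive (fun t => E x t) v (Ev x v)) ->
  jcont Ex -> is_derive Y w y' ->
  is_derive (fun t => E (Y t) t) w (Ex (Y w) w * y' + Ev (Y w) w).
Proof.
  intros H1 H2 Hc HY.
  assert (HF : filterdiff (fun u : R * R => E (fst u) (snd u)) (locally (Y w, w))
     (fun u : R * R => plus (scal (fst u) (Ex (Y w) w)) (scal (snd u) (Ev (Y w) w)))).
  { apply (is_derive_filterdiff E (Y w) w Ex (Ev (Y w) w)); auto.
    apply filter_forall. intros u. apply H1. }
  pose proof (filterdiff_comp'_2 Y (fun t : R => t) E w _ _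
     (fun a b => plus (scal a (Ex (Y w) w)) (scal b (Ev (Y w) w))) HY (d_id w) HF) as HH.
  eapply filterdiff_ext_lin; [exact HH|].
  intros y. simpl. unfold scal, plus; simpl. unfold mult; simpl. ring.
Qed.

Lemma quotient_estimate (Q kw D B c eps : R) :
  0 < c -> c <= D -> c <= B -> 0 < eps ->
  Rabs (Q - kw) < eps * c / 2 -> Rabs (D - B) < eps * (c * c) / (2 * (Rabs kw + 1)) ->
  Rabs (- Q / D - - kw / B) < eps.
Proof.
  intros Hc HD HB Heps HQ HDB.
  assert (Hk := Rabs_pos kw).
  replace (- Q / D - - kw / B) with ((kw * (D - B) + B * (kw - Q)) / (D * B)) by (field; lra).
  unfold Rdiv. rewrite Rabs_mult, (Rabs_inv (D * B)), (Rabs_pos_eq (D * B)) by nra.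
  apply Rle_lt_trans with ((Rabs kw * Rabs (D - B) + B * Rabs (kw - Q)) * / (D * B)).
  { apply Rmult_le_compat_r; [left; apply Rinv_0_lt_compat; nra|].
    eapply Rle_trans; [apply Rabs_triang|]. rewrite !Rabs_mult, (Rabs_pos_eq B) by lra. lra. }
  rewrite Rmult_plus_distr_r.
  assert (T1 : Rabs kw * Rabs (D - B) * / (D * B) <= eps / 2).
  { apply Rle_trans with (Rabs kw * Rabs (D - B) * / (c * c)).
    - apply Rmult_le_compat_l; [apply Rmult_le_pos; apply Rabs_pos|].
      apply Rinv_le_contravar; [nra|]. apply Rmult_le_compat; lra.
    - apply (Rmult_le_reg_r (c * c)); [nra|]. rewrite Rmult_assoc, Rinv_l, Rmult_1_r by nra.
      assert (Rabs kw * Rabs (D - B) <= (Rabs kw + 1) * (eps * (c * c) / (2 * (Rabs kw + 1))))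
        by (apply Rmult_le_compat; try apply Rabs_pos; lra).
      replace ((Rabs kw + 1) * (eps * (c * c) / (2 * (Rabs kw + 1)))) with (eps / 2 * (c * c)) in H
        by (field; lra). lra. }
  assert (T2 : B * Rabs (kw - Q) * / (D * B) < eps / 2).
  { replace (B * Rabs (kw - Q) * / (D * B)) with (Rabs (Q - kw) / D)
      by (rewrite Rabs_minus_sym; field; lra).
    apply Rle_lt_trans with (Rabs (Q - kw) / c).
    - unfold Rdiv. apply Rmult_le_compat_l; [apply Rabs_pos|]. apply Rinv_le_contravar; lra.
    - apply (Rmult_lt_reg_r c); auto. replace (Rabs (Q - kw) / c * c) with (Rabs (Q - kw)) by (field; lra).
      lra. }
  lra.
Qed.

Lemma implicit_derive (K Kx : R -> R -> R) (Y : R -> R) w kw c Lp :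
  (forall x w', is_derive (fun t => K t w') x (Kx x w')) ->
  (forall x w', c <= Kx x w') -> 0 < c ->
  is_derive (fun t => K (Y w) t) w kw ->
  continuous (fun p : R * R => Kx (fst p) (snd p)) (Y w, w) ->
  (forall w', Rabs (Y w' - Y w) <= Lp * Rabs (w' - w)) -> 0 <= Lp ->
  (forall w', K (Y w') w' = 0) ->
  is_derive Y w (- kw / Kx (Y w) w).
Proof.
  intros HKx Hc Hc0 Hkw HKc HL HL0 HK.
  apply is_derive_Reals. apply is_derive_Reals in Hkw.
  intros eps Heps.
  assert (He1 : 0 < eps * c / 2) by (apply Rmult_lt_0_compat; [apply Rmult_lt_0_compat|]; lra).
  destruct (Hkw _ He1) as [d1 Hd1].
  assert (He2 : 0 < eps * (c * c) / (2 * (Rabs kw + 1))).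
  { apply Rdiv_lt_0_compat; [apply Rmult_lt_0_compat; nra|]. generalize (Rabs_pos kw); lra. }
  destruct (proj1 (continuous2_iff _ _) HKc _ He2) as [rho [Hrho Hr]].
  assert (Hd : 0 < Rmin d1 (rho / (Lp + 1))) by (apply Rmin_pos; [apply cond_pos|apply Rdiv_lt_0_compat; lra]).
  exists (mkposreal _ Hd). intros t Ht0 Ht. simpl in Ht.
  assert (Ht1 : Rabs t < d1) by (eapply Rlt_le_trans; [exact Ht|apply Rmin_l]).
  assert (Ht2 : Rabs t * (Lp + 1) < rho).
  { apply (Rmult_lt_compat_r (Lp + 1)) in Ht; [|lra].
    eapply Rlt_le_trans; [exact Ht|]. rewrite Rmult_comm.
    apply Rle_trans with ((Lp + 1) * (rho / (Lp + 1))); [apply Rmult_le_compat_l; [lra|apply Rmin_r]|].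
    right; field; lra. }
  (* The increment of Y, by the mean value theorem in the first variable. *)
  destruct (mvt_exists (fun x => K x (w + t)) (fun x => Kx x (w + t)) (Y w) (Y (w + t))
             (fun x => HKx x (w + t))) as [xi [Hxi Hm]].
  set (Q := (K (Y w) (w + t) - K (Y w) w) / t).
  assert (Hincr : Y (w + t) - Y w = - (Q * t) / Kx xi (w + t)).
  { assert (HQt : Q * t = K (Y w) (w + t)) by (unfold Q; rewrite (HK w); field; auto).
    assert (HD := Hc xi (w + t)). rewrite HQt. simpl in Hm. rewrite (HK (w + t)) in Hm.
    field_simplify_eq; lra. }
  (* The intermediate point xi is close to Y w, so Kx xi (w+t) ~ Kx (Y w) w. *)
  assert (HYd : Rabs (Y (w + t) - Y w) <= Lp * Rabs t).
  { replace t with ((w + t) - w) at 2 by ring. apply HL. }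
  assert (HxiY : Rabs (xi - Y w) < rho).
  { apply Rle_lt_trans with (Rabs (Y (w + t) - Y w)); [|generalize (Rabs_pos t); nra].
    unfold Rmin, Rmax in Hxi. destruct (Rle_dec (Y w) (Y (w + t))).
    - rewrite (Rabs_pos_eq (Y (w + t) - Y w)) by lra. apply Rabs_le; lra.
    - rewrite (Rabs_left1 (Y (w + t) - Y w)) by lra. apply Rabs_le; lra. }
  assert (HDB : Rabs (Kx xi (w + t) - Kx (Y w) w) < eps * (c * c) / (2 * (Rabs kw + 1))).
  { apply (Hr (xi, w + t)); simpl; auto. replace (w + t - w) with t by ring.
    generalize (Rabs_pos t); nra. }
  replace ((Y (w + t) - Y w) / t) with (- Q / Kx xi (w + t)) by (rewrite Hincr; field; split; auto;
    generalize (Hc xi (w + t)); lra).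
  apply quotient_estimate with c; auto. apply Hd1; auto.
Qed.

(** * The saturation chi_L(y) = y L^2 / (L^2 + y^2) *)

Definition chi (L y : R) := y * L ^ 2 / (L ^ 2 + y ^ 2).
Definition chi1 (L y : R) := L ^ 2 * (L ^ 2 - y ^ 2) / (L ^ 2 + y ^ 2) ^ 2.
Definition chi2 (L y : R) := 2 * L ^ 2 * y * (y ^ 2 - 3 * L ^ 2) / (L ^ 2 + y ^ 2) ^ 3.

Section Saturation.
Variable L : R.
Hypothesis HL : 0 < L.

Lemma den_pos y : 0 < L ^ 2 + y ^ 2.
Proof. assert (0 < L ^ 2) by (apply pow_lt; lra). assert (0 <= y ^ 2) by apply pow2_ge_0. lra. Qed.

Lemma chi_d y : is_derive (chi L) y (chi1 L y).
Proof. unfold chi, chi1. assert (H := den_pos y). auto_derive; [lra|field; lra]. Qed.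
Lemma chi1_d y : is_derive (chi1 L) y (chi2 L y).
Proof.
  unfold chi1, chi2. assert (H := den_pos y). simpl in H. auto_derive.
  - apply Rgt_not_eq. apply Rmult_lt_0_compat; nra.
  - field. lra.
Qed.
Lemma chi2_c y : continuous (chi2 L) y.
Proof.
  apply (ex_derive_continuous (chi2 L)). unfold chi2. assert (H := den_pos y). simpl in H.
  auto_derive. apply Rgt_not_eq. apply Rmult_lt_0_compat; [lra|]. apply Rmult_lt_0_compat; nra.
Qed.
Lemma chi_0 : chi L 0 = 0.
Proof. unfold chi. field. assert (H := den_pos 0). lra. Qed.

Lemma chi_abs y : Rabs (chi L y) <= Rabs y.
Proof.
  unfold chi. assert (H := den_pos y). unfold Rdiv.
  rewrite Rabs_mult, Rabs_mult, (Rabs_pos_eq (L ^ 2)) by (apply pow_le; lra).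
  rewrite Rabs_inv, (Rabs_pos_eq (L ^ 2 + y ^ 2)) by lra.
  rewrite Rmult_assoc. rewrite <- (Rmult_1_r (Rabs y)) at 2. apply Rmult_le_compat_l; [apply Rabs_pos|].
  apply (Rmult_le_reg_r (L ^ 2 + y ^ 2)); auto. rewrite Rmult_assoc, Rinv_l by lra.
  assert (0 <= y ^ 2) by apply pow2_ge_0. lra.
Qed.

Lemma chi_bnd y : Rabs (chi L y) <= L / 2.
Proof.
  unfold chi. assert (H := den_pos y). unfold Rdiv.
  rewrite Rabs_mult, Rabs_mult, (Rabs_pos_eq (L ^ 2)) by (apply pow_le; lra).
  rewrite Rabs_inv, (Rabs_pos_eq (L ^ 2 + y ^ 2)) by lra.
  apply (Rmult_le_reg_r (L ^ 2 + y ^ 2)); auto. rewrite Rmult_assoc, Rinv_l, Rmult_1_r by lra.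
  rewrite <- (pow2_abs y).
  assert (0 <= (L - Rabs y) ^ 2) by apply pow2_ge_0. generalize (Rabs_pos y). nra.
Qed.

Lemma chi1_bnd y : Rabs (chi1 L y) <= 1.
Proof.
  unfold chi1. assert (H := den_pos y).
  assert (H2 : 0 < (L ^ 2 + y ^ 2) ^ 2) by (apply pow_lt; lra).
  unfold Rdiv. rewrite Rabs_mult, Rabs_inv, (Rabs_pos_eq ((L ^ 2 + y ^ 2) ^ 2)) by lra.
  apply (Rmult_le_reg_r ((L ^ 2 + y ^ 2) ^ 2)); auto. rewrite Rmult_assoc, Rinv_l by lra.
  rewrite Rmult_1_r, Rmult_1_l. rewrite Rabs_mult, (Rabs_pos_eq (L ^ 2)) by (apply pow_le; lra).
  assert (0 <= L ^ 2) by (apply pow_le; lra). assert (0 <= y ^ 2) by apply pow2_ge_0.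
  destruct (Rle_dec (y ^ 2) (L ^ 2)).
  - rewrite Rabs_pos_eq by lra. nra.
  - rewrite Rabs_left1 by lra. nra.
Qed.

Lemma one_minus_chi1 y : Rabs (1 - chi1 L y) <= 3 * y ^ 2 / L ^ 2 + y ^ 4 / L ^ 4.
Proof.
  assert (H := den_pos y). assert (HL2 : 0 < L ^ 2) by (apply pow_lt; lra).
  assert (E : 1 - chi1 L y = (3 * L ^ 2 * y ^ 2 + y ^ 4) / (L ^ 2 + y ^ 2) ^ 2)
    by (unfold chi1; field; lra).
  rewrite E. assert (0 <= y ^ 2) by apply pow2_ge_0.
  assert (0 <= y ^ 4) by (replace (y ^ 4) with ((y^2)^2) by ring; apply pow2_ge_0).
  rewrite Rabs_pos_eq by (apply Rdiv_le_0_compat; [nra|apply pow_lt; lra]).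
  apply Rle_trans with ((3 * L ^ 2 * y ^ 2 + y ^ 4) / (L ^ 2) ^ 2).
  - unfold Rdiv. apply Rmult_le_compat_l; [nra|]. apply Rinv_le_contravar; [apply pow_lt; lra|].
    apply pow_incr. lra.
  - right. field. lra.
Qed.

Lemma chi2_small y : Rabs y <= L -> Rabs (chi2 L y) <= 6 * Rabs y / L ^ 2.
Proof.
  intros Hy. assert (HD := den_pos y).
  assert (HL2 : 0 < L ^ 2) by (apply pow_lt; lra).
  assert (Hy2 : y ^ 2 <= L ^ 2) by (apply sq_le in Hy; auto).
  assert (Hy0 : 0 <= y ^ 2) by apply pow2_ge_0.
  unfold chi2, Rdiv. rewrite !Rabs_mult, Rabs_inv.
  rewrite (Rabs_pos_eq ((L ^ 2 + y ^ 2) ^ 3)) by (apply pow_le; lra).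
  rewrite (Rabs_pos_eq 2) by lra. rewrite (Rabs_pos_eq (L ^ 2)) by lra.
  assert (A : Rabs (y ^ 2 - 3 * L ^ 2) <= 3 * L ^ 2) by (apply Rabs_le; lra).
  assert (B : / (L ^ 2 + y ^ 2) ^ 3 <= / (L ^ 2) ^ 3)
    by (apply Rinv_le_contravar; [apply pow_lt; lra | apply pow_incr; lra]).
  assert (Hinv : 0 <= / (L ^ 2 + y ^ 2) ^ 3) by (left; apply Rinv_0_lt_compat, pow_lt; lra).
  apply Rle_trans with (2 * L ^ 2 * Rabs y * (3 * L ^ 2) * / (L ^ 2) ^ 3).
  - apply Rmult_le_compat; try apply Rmult_le_pos; try apply Rmult_le_pos; try lra; try apply Rabs_pos.
    apply Rmult_le_compat_l; auto. apply Rmult_le_pos; [lra|apply Rabs_pos].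
  - right. field. lra.
Qed.

Lemma C1_xy_chi E : C1_xy E -> C1_xy (fun x v => chi L (E x v)).
Proof.
  intros. apply (C1_xy_comp (chi L) (chi1 L)); auto; [apply chi_d|].
  intros; apply (cont_of_d _ (chi2 L)); apply chi1_d.
Qed.
Lemma C1_xy_chi1 E : C1_xy E -> C1_xy (fun x v => chi1 L (E x v)).
Proof. intros. apply (C1_xy_comp (chi1 L) (chi2 L)); auto; [apply chi1_d|apply chi2_c]. Qed.

End Saturation.

(** * The bent map and its inverse *)

Definition bent (L : R) (h h1 : R -> R) (p : pt) : pt :=
  (fst p - chi L (snd p) * h1 (fst p), snd p + h (fst p)).

Section Bent.
(* h is C^3 with |h'| <= B1 <= 1/2 and L |h''| <= 1/2: enough for global invertibility. *)
Variables (L B1 B2 : R) (h h1 h2 h3 : R -> R).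
Hypothesis HL : 0 < L.
Hypothesis Hh0 : forall x, is_derive h x (h1 x).
Hypothesis Hh1 : forall x, is_derive h1 x (h2 x).
Hypothesis Hh2 : forall x, is_derive h2 x (h3 x).
Hypothesis Hh3 : forall x, continuous h3 x.
Hypothesis Hb1 : forall x, Rabs (h1 x) <= B1.
Hypothesis Hb2 : forall x, Rabs (h2 x) <= B2.
Hypothesis HB1 : 0 <= B1 <= 1/2.
Hypothesis HB2 : L * B2 <= 1/2.

Lemma C1_xy_h : C1_xy (fun x _ => h x).
Proof. apply (C1_xy_fx h h1); auto. intros; apply (cont_of_d h1 h2); auto. Qed.
Lemma C1_xy_h1 : C1_xy (fun x _ => h1 x).
Proof. apply (C1_xy_fx h1 h2); auto. intros; apply (cont_of_d h2 h3); auto. Qed.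
Lemma C1_xy_h2 : C1_xy (fun x _ => h2 x).
Proof. apply (C1_xy_fx h2 h3); auto. Qed.

Lemma bent_C2 S : C2_near S (bent L h h1).
Proof.
  apply C2_near_global.
  - apply (C2_xy_pt (fun x y => x - chi L y * h1 x)).
    exists (fun x y => 1 - chi L y * h2 x), (fun x y => - (chi1 L y * h1 x)). splits.
    + intros x y. eapply d_eq; [apply d_sub; [apply d_id | apply d_cmul; apply Hh1] | ring].
    + intros x y. eapply d_eq; [apply d_sub; [apply d_const|
        apply (d_mult (chi L) (fun _ => h1 x)); [apply chi_d; auto| apply d_const]] | ring].
    + apply C1_xy_jc. apply C1_xy_sub; [apply C1_xy_x|].
      apply C1_xy_mult; [apply C1_xy_chi, C1_xy_v; auto|apply C1_xy_h1].
    + apply C1_xy_sub; [apply C1_xy_const|].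
      apply C1_xy_mult; [apply C1_xy_chi, C1_xy_v; auto|apply C1_xy_h2].
    + apply C1_xy_opp, C1_xy_mult; [apply C1_xy_chi1, C1_xy_v; auto|apply C1_xy_h1].
  - apply (C2_xy_pt (fun x y => y + h x)).
    exists (fun x y => h1 x), (fun x y => 1). splits.
    + intros x y. eapply d_eq; [apply (d_plus (fun _ => y) h); [apply d_const| apply Hh0] | ring].
    + intros x y. eapply d_eq; [apply (d_plus (fun t => t) (fun _ => h x)); [apply d_id| apply d_const] | ring].
    + apply C1_xy_jc. apply C1_xy_plus; [apply C1_xy_v|apply C1_xy_h].
    + apply C1_xy_h1.
    + apply C1_xy_const.
Qed.

(* Inverting the bent map at (u, v) amounts to solving Phi x v = u, where
   y = v - h x; Phix and Phiv are the partial derivatives of Phi. *)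
Definition Phi x v := x - chi L (v - h x) * h1 x.
Definition Phix x v := 1 + chi1 L (v - h x) * h1 x ^ 2 - chi L (v - h x) * h2 x.
Definition Phiv x v := - (chi1 L (v - h x) * h1 x).

Lemma Phi_dx x v : is_derive (fun t => Phi t v) x (Phix x v).
Proof.
  unfold Phi, Phix. eapply d_eq.
  - apply d_sub; [apply d_id|]. apply (d_mult (fun t => chi L (v - h t)) h1); [|apply Hh1].
    apply (d_comp (chi L) (fun t => v - h t)); [apply chi_d; auto|].
    apply d_sub; [apply d_const|apply Hh0].
  - ring.
Qed.
Lemma Phi_dv x v : is_derive (fun t => Phi x t) v (Phiv x v).
Proof.
  unfold Phi, Phiv. eapply d_eq.
  - apply d_sub; [apply d_const|]. apply (d_mult (fun t => chi L (t - h x)) (fun _ => h1 x)); [|apply d_const].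
    apply (d_comp (chi L) (fun t => t - h x)); [apply chi_d; auto|].
    apply d_sub; [apply d_id|apply d_const].
  - ring.
Qed.

(* Phi is uniformly increasing in x: this is where B1 <= 1/2 and L B2 <= 1/2 enter. *)
Lemma Phix_ge x v : 1/2 <= Phix x v.
Proof.
  unfold Phix. assert (A1 := chi1_bnd L HL (v - h x)). assert (A2 := chi_bnd L HL (v - h x)).
  assert (A3 : h1 x ^ 2 <= B1 ^ 2) by (apply sq_le; auto).
  assert (A5 : 0 <= h1 x ^ 2) by apply pow2_ge_0.
  assert (T1 : Rabs (chi1 L (v - h x) * h1 x ^ 2) <= B1 ^ 2).
  { rewrite Rabs_mult, (Rabs_pos_eq (h1 x ^ 2)) by auto.
    apply Rle_trans with (1 * h1 x ^ 2); [|lra]. apply Rmult_le_compat_r; auto. }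
  assert (T2 : Rabs (chi L (v - h x) * h2 x) <= L / 2 * B2).
  { rewrite Rabs_mult. apply Rmult_le_compat; auto; apply Rabs_pos. }
  apply Rabs_le_between in T1. apply Rabs_le_between in T2.
  assert (B1 ^ 2 <= 1/4) by (simpl; nra). lra.
Qed.
Lemma Phix_pos x v : Phix x v <> 0.
Proof. assert (H := Phix_ge x v). lra. Qed.

Lemma Phiv_bnd x v : Rabs (Phiv x v) <= B1.
Proof.
  unfold Phiv. rewrite Rabs_Ropp, Rabs_mult. rewrite <- (Rmult_1_l B1).
  apply Rmult_le_compat; auto; try apply Rabs_pos. apply chi1_bnd; auto.
Qed.

Lemma C1_xy_vh : C1_xy (fun x v => v - h x).
Proof. apply C1_xy_sub; [apply C1_xy_v|apply C1_xy_h]. Qed.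
Lemma C1_xy_Phix : C1_xy Phix.
Proof.
  unfold Phix. apply C1_xy_sub; [apply C1_xy_plus; [apply C1_xy_const|]|].
  - apply C1_xy_mult; [apply C1_xy_chi1, C1_xy_vh; auto|].
    apply (C1_xy_ext (fun x v => h1 x * h1 x)); [apply C1_xy_mult; apply C1_xy_h1|intros; ring].
  - apply C1_xy_mult; [apply C1_xy_chi, C1_xy_vh; auto|apply C1_xy_h2].
Qed.
Lemma C1_xy_Phiv : C1_xy Phiv.
Proof. apply C1_xy_opp, C1_xy_mult; [apply C1_xy_chi1, C1_xy_vh; auto|apply C1_xy_h1]. Qed.
Lemma C1_xy_iPhix : C1_xy (fun x v => / Phix x v).
Proof. apply C1_xy_inv; [apply C1_xy_Phix|apply Phix_pos]. Qed.

Lemma Phi_mono a b v : a <= b -> 1/2 * (b - a) <= Phi b v - Phi a v.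
Proof.
  intros Hab. apply (mvt_lower (fun t => Phi t v) (fun t => Phix t v)); auto.
  - intros; apply Phi_dx.
  - intros; apply Phix_ge.
Qed.

(* Phi x v = u has a (unique) solution x: Phi . v is within L B1 / 2 of the
   identity, so the intermediate value theorem applies. *)
Lemma Phi_root_ex u v : exists x, Phi x v = u.
Proof.
  set (C := L / 2 * B1).
  assert (Hnear : forall x, Rabs (Phi x v - x) <= C).
  { intros x. unfold Phi, C. replace (x - chi L (v - h x) * h1 x - x) with (- (chi L (v - h x) * h1 x)) by ring.
    rewrite Rabs_Ropp, Rabs_mult. apply Rmult_le_compat; auto; try apply Rabs_pos. apply chi_bnd; auto. }
  assert (HC : 0 <= C) by (unfold C; apply Rmult_le_pos; lra).
  assert (Ha := Hnear (u - C - 1)). assert (Hb := Hnear (u + C + 1)).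
  apply Rabs_le_between in Ha. apply Rabs_le_between in Hb.
  destruct (IVT_gen (fun t => Phi t v) (u - C - 1) (u + C + 1) u) as [x [_ Hx]].
  - intros t. apply continuity_pt_filterlim.
    apply (cont_of_d (fun t => Phi t v) (fun t => Phix t v)). apply Phi_dx.
  - split.
    + apply Rle_trans with (Phi (u - C - 1) v); [apply Rmin_l|lra].
    + apply Rle_trans with (Phi (u + C + 1) v); [lra|apply Rmax_r].
  - exists x; auto.
Qed.

Definition Xinv u v := epsilon (inhabits 0) (fun x => Phi x v = u).

Lemma Xinv_spec u v : Phi (Xinv u v) v = u.
Proof. unfold Xinv. apply (epsilon_spec (inhabits 0) (fun x => Phi x v = u)). apply Phi_root_ex. Qed.

Lemma Xinv_unique x u v : Phi x v = u -> Xinv u v = x.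
Proof.
  intros H. assert (E : Phi (Xinv u v) v = Phi x v) by (rewrite Xinv_spec; auto).
  destruct (Rle_dec (Xinv u v) x) as [Hle|Hgt].
  - assert (M := Phi_mono _ _ v Hle). lra.
  - assert (M := Phi_mono x (Xinv u v) v ltac:(lra)). lra.
Qed.

Lemma Xinv_lip u1 v1 u2 v2 :
  Rabs (Xinv u1 v1 - Xinv u2 v2) <= 2 * Rabs (u1 - u2) + 2 * B1 * Rabs (v1 - v2).
Proof.
  set (x1 := Xinv u1 v1). set (x2 := Xinv u2 v2).
  assert (E1 : Phi x1 v1 = u1) by apply Xinv_spec.
  assert (E2 : Phi x2 v2 = u2) by apply Xinv_spec.
  assert (M : Rabs (Phi x2 v1 - Phi x2 v2) <= B1 * Rabs (v1 - v2)).
  { apply (mvt_bound (fun t => Phi x2 t) (fun t => Phiv x2 t)); intros; [apply Phi_dv|apply Phiv_bnd]. }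
  assert (K : 1/2 * Rabs (x1 - x2) <= Rabs (Phi x1 v1 - Phi x2 v1)).
  { destruct (Rle_dec x2 x1).
    - assert (H := Phi_mono x2 x1 v1 r). rewrite !Rabs_pos_eq; lra.
    - assert (H := Phi_mono x1 x2 v1 ltac:(lra)). rewrite !Rabs_left1; lra. }
  rewrite E1 in K.
  assert (Rabs (u1 - Phi x2 v1) <= Rabs (u1 - u2) + B1 * Rabs (v1 - v2)).
  { replace (u1 - Phi x2 v1) with ((u1 - u2) - (Phi x2 v1 - Phi x2 v2)) by (rewrite <- E2; ring).
    eapply Rle_trans; [apply Rabs_triang|]. rewrite Rabs_Ropp. lra. }
  lra.
Qed.

Lemma Xinv_cont p : continuous (fun p : R * R => Xinv (fst p) (snd p)) p.
Proof.
  apply continuous2_iff. intros eps Heps.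
  set (d := eps / (2 + 2 * B1 + 1)).
  assert (Hd : 0 < d) by (unfold d; apply Rdiv_lt_0_compat; lra).
  exists d. split; auto. intros [q1 q2] H1 H2. destruct p as [p1 p2]. simpl in *.
  eapply Rle_lt_trans; [apply Xinv_lip|].
  assert (E : eps = (2 + 2 * B1 + 1) * d) by (unfold d; field; lra).
  assert (2 * B1 * Rabs (q2 - p2) <= 2 * B1 * d) by (apply Rmult_le_compat_l; lra).
  lra.
Qed.

(* Partial derivatives of Xinv, by implicit differentiation of Phi (Xinv u v) v = u. *)
Lemma Xinv_du u v : is_derive (fun t => Xinv t v) u (/ Phix (Xinv u v) v).
Proof.
  eapply d_eq; [apply (implicit_derive (fun x w => Phi x v - w) (fun x w => Phix x v)
                        (fun t => Xinv t v) u (-1) (1/2) 2)|field; apply Phix_pos]; try lra.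
  - intros x w'. eapply d_eq; [apply d_sub; [apply Phi_dx|apply d_const]|ring].
  - intros; apply Phix_ge.
  - eapply d_eq; [apply d_sub; [apply d_const|apply d_id]|ring].
  - apply (continuous_comp_2 fst (fun _ => v) Phix); [apply continuous_fst|apply continuous_const|].
    apply (C1_xy_jc _ C1_xy_Phix).
  - intros w'. eapply Rle_trans; [apply Xinv_lip|]. rewrite Rminus_diag, Rabs_R0. lra.
  - intros w'. rewrite Xinv_spec. ring.
Qed.

Lemma Xinv_dv u v : is_derive (fun t => Xinv u t) v (- Phiv (Xinv u v) v * / Phix (Xinv u v) v).
Proof.
  eapply d_eq; [apply (implicit_derive (fun x w => Phi x w - u) Phix (fun t => Xinv u t) v
                        (Phiv (Xinv u v) v) (1/2) (2 * B1))|field; apply Phix_pos]; try lra.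
  - intros x w'. eapply d_eq; [apply d_sub; [apply Phi_dx|apply d_const]|ring].
  - intros; apply Phix_ge.
  - eapply d_eq; [apply d_sub; [apply Phi_dv|apply d_const]|ring].
  - apply (C1_xy_jc _ C1_xy_Phix).
  - intros w'. eapply Rle_trans; [apply Xinv_lip|]. rewrite Rminus_diag, Rabs_R0. lra.
  - intros w'. rewrite Xinv_spec. ring.
Qed.

Definition subst_du (Ex : R -> R -> R) x v := Ex x v * / Phix x v.
Definition subst_dv (Ex Ev : R -> R -> R) x v := Ex x v * (- Phiv x v * / Phix x v) + Ev x v.

Lemma subst_derivatives (E Ex Ev : R -> R -> R) :
  (forall x v, is_derive (fun t => E t v) x (Ex x v)) ->
  (forall x v, is_derive (fun t => E x t) v (Ev x v)) -> jcont Ex ->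
  (forall p : pt, is_derive (fun t => E (Xinv t (snd p)) (snd p)) (fst p)
                    (subst_du Ex (Xinv (fst p) (snd p)) (snd p))) /\
  (forall p : pt, is_derive (fun t => E (Xinv (fst p) t) t) (snd p)
                    (subst_dv Ex Ev (Xinv (fst p) (snd p)) (snd p))).
Proof.
  intros H1 H2 H4. split; intros [u v]; simpl.
  - eapply d_eq; [apply (d_comp (fun x => E x v) (fun t => Xinv t v)); [apply H1|apply Xinv_du]|].
    unfold subst_du; ring.
  - apply (chain2 E Ex Ev (fun t => Xinv u t)); auto. apply Xinv_dv.
Qed.

Lemma subst_cont E : jcont E -> forall p, continuous (fun p : R * R => E (Xinv (fst p) (snd p)) (snd p)) p.
Proof.
  intros HE p. apply (continuous_comp_2 (fun p : R * R => Xinv (fst p) (snd p)) snd E);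
    [apply Xinv_cont|destruct p; apply continuous_snd|apply HE].
Qed.

Lemma subst_C1 E : C1_xy E -> C1_pt (fun p => E (Xinv (fst p) (snd p)) (snd p)).
Proof.
  intros (Ex&Ev&H1&H2&H3&H4&H5).
  destruct (subst_derivatives E Ex Ev H1 H2 H4) as [D1 D2].
  assert (Hi : jcont (fun x v => / Phix x v)) by apply (C1_xy_jc _ C1_xy_iPhix).
  exists (fun p => subst_du Ex (Xinv (fst p) (snd p)) (snd p)),
         (fun p => subst_dv Ex Ev (Xinv (fst p) (snd p)) (snd p)).
  splits; auto; apply subst_cont; auto; unfold subst_du, subst_dv.
  - apply jc_mult; auto.
  - apply jc_plus; auto. apply jc_mult; auto. apply jc_mult; auto.
    apply jc_opp, (C1_xy_jc _ C1_xy_Phiv).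
Qed.

Lemma subst_C2 E : C2_xy E -> C2_pt (fun p => E (Xinv (fst p) (snd p)) (snd p)).
Proof.
  intros (Ex&Ev&H1&H2&H3&H4&H5).
  destruct (subst_derivatives E Ex Ev H1 H2 (C1_xy_jc _ H4)) as [D1 D2].
  exists (fun p => subst_du Ex (Xinv (fst p) (snd p)) (snd p)),
         (fun p => subst_dv Ex Ev (Xinv (fst p) (snd p)) (snd p)).
  splits; auto; [apply subst_cont; auto|apply subst_C1; unfold subst_du, subst_dv ..].
  - apply C1_xy_mult; auto. apply C1_xy_iPhix.
  - apply C1_xy_plus; auto. apply C1_xy_mult; auto.
    apply C1_xy_mult; [apply C1_xy_opp, C1_xy_Phiv|apply C1_xy_iPhix].
Qed.

Definition unbent (p : pt) : pt := (Xinv (fst p) (snd p), snd p - h (Xinv (fst p) (snd p))).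

Lemma unbent_bent p : unbent (bent L h h1 p) = p.
Proof.
  destruct p as [x y]. unfold unbent, bent. simpl.
  assert (E : Xinv (x - chi L y * h1 x) (y + h x) = x).
  { apply Xinv_unique. unfold Phi. replace (y + h x - h x) with y by ring. reflexivity. }
  rewrite E. f_equal. ring.
Qed.

Lemma unbent_C2 S : C2_near S unbent.
Proof.
  apply C2_near_global.
  - apply (subst_C2 (fun x v => x)).
    exists (fun _ _ => 1), (fun _ _ => 0). splits;
      [intros; apply d_id | intros; apply d_const | apply jc_x | apply C1_xy_const | apply C1_xy_const].
  - apply (subst_C2 (fun x v => v - h x)).
    exists (fun x _ => - h1 x), (fun _ _ => 1). splits.
    + intros x v. eapply d_eq; [apply d_sub; [apply d_const|apply Hh0]|ring].
    + intros x v. eapply d_eq; [apply d_sub; [apply d_id|apply d_const]|ring].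
    + apply C1_xy_jc, C1_xy_vh.
    + apply C1_xy_opp, C1_xy_h1.
    + apply C1_xy_const.
Qed.

Theorem bent_diffeo S : C2_diffeo_onto_image S (bent L h h1).
Proof.
  split; [apply bent_C2|]. exists unbent. split; [intros p _; apply unbent_bent|apply unbent_C2].
Qed.
End Bent.

(** * Quantitative bounds on the bent map *)

Lemma near_identity_bilip a1 a2 e1 e2 :
  sqrt (e1 ^ 2 + e2 ^ 2) <= sqrt (a1 ^ 2 + a2 ^ 2) / 2 ->
  sqrt (a1 ^ 2 + a2 ^ 2) / 2 <= sqrt ((a1 + e1) ^ 2 + (a2 + e2) ^ 2) /\
  sqrt ((a1 + e1) ^ 2 + (a2 + e2) ^ 2) <= 2 * sqrt (a1 ^ 2 + a2 ^ 2).
Proof.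
  intros He. assert (T1 := enorm_triang a1 a2 e1 e2).
  assert (T2 := enorm_triang (a1 + e1) (a2 + e2) (- e1) (- e2)).
  replace (a1 + e1 + - e1) with a1 in T2 by ring. replace (a2 + e2 + - e2) with a2 in T2 by ring.
  replace ((- e1) ^ 2 + (- e2) ^ 2) with (e1 ^ 2 + e2 ^ 2) in T2 by ring.
  assert (0 <= sqrt (a1 ^ 2 + a2 ^ 2)) by apply sqrt_pos. lra.
Qed.

(* The rotation by the angle whose tangent is u. *)
Definition rot (u : R) : mat2 :=
  let c := / sqrt (1 + u ^ 2) in Mat2 c (- (u * c)) (u * c) c.

Lemma rot_cos_facts u : let c := / sqrt (1 + u ^ 2) in
  0 <= 1 - c <= u ^ 2 /\ c * c * (1 + u ^ 2) = 1.
Proof.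
  intros c. assert (Hu : 0 <= u ^ 2) by apply pow2_ge_0.
  assert (Hr1 : 1 <= sqrt (1 + u ^ 2))
    by (rewrite <- sqrt_1 at 1; apply sqrt_le_1_alt; lra).
  assert (Hr2 : sqrt (1 + u ^ 2) <= 1 + u ^ 2) by (apply sqrt_le_of_sq; nra).
  assert (Hs := sqrt_sqrt (1 + u ^ 2) ltac:(lra)).
  splits.
  - unfold c. assert (/ sqrt (1 + u ^ 2) <= 1) by (apply Rle_trans with (/ 1); [apply Rinv_le_contravar; lra | rewrite Rinv_1; lra]). lra.
  - unfold c. apply Rle_trans with (sqrt (1 + u ^ 2) - 1); [|lra].
    apply (Rmult_le_reg_r (sqrt (1 + u ^ 2))); [lra|].
    replace ((1 - / sqrt (1 + u ^ 2)) * sqrt (1 + u ^ 2)) with (sqrt (1 + u ^ 2) - 1) by (field; lra).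
    nra.
  - unfold c. rewrite <- Rinv_mult, Hs. field. lra.
Qed.

Lemma rot_O2 u : in_O2 (rot u).
Proof.
  destruct (rot_cos_facts u) as [_ C]. unfold in_O2, rot; cbn [m11 m12 m21 m22].
  set (c := / sqrt (1 + u ^ 2)) in *. splits; [rewrite <- C; ring .. | ring].
Qed.

Lemma mnorm_le (M : mat2) (A B C D K : R) :
  Rabs (m11 M) <= A -> Rabs (m12 M) <= B -> Rabs (m21 M) <= C -> Rabs (m22 M) <= D ->
  A ^ 2 + B ^ 2 + C ^ 2 + D ^ 2 <= K ^ 2 -> 0 <= K -> mnorm M <= K.
Proof.
  intros H1 H2 H3 H4 HK HK0. unfold mnorm. apply sqrt_le_of_sq; auto.
  apply sq_le in H1, H2, H3, H4. lra.
Qed.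

Section Bounds.
Variables (L th : R) (h h1 h2 h3 : R -> R).
Hypothesis HL : 1 <= L.
Hypothesis Hth : 0 < th <= 1/100.
Hypothesis HLth : 1 / L <= th.
Hypothesis Hh0 : forall x, is_derive h x (h1 x).
Hypothesis Hh1 : forall x, is_derive h1 x (h2 x).
Hypothesis Hh2 : forall x, is_derive h2 x (h3 x).
Hypothesis Hb1 : forall x, Rabs (h1 x) <= 3 * th.
Hypothesis Hb2 : forall x, Rabs (h2 x) <= 27 * th / L.
Hypothesis Hb3 : forall x, Rabs (h3 x) <= 60 * th / L ^ 2.

Let F := bent L h h1.

Lemma F_d11 : Defs.d1 (comp1 F) = fun p => 1 - chi L (snd p) * h2 (fst p).
Proof.
  apply d1_eq. intros [x y]. unfold comp1, F, bent. simpl.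
  eapply d_eq; [apply d_sub; [apply d_id | apply d_cmul; apply Hh1] | ring].
Qed.
Lemma F_d21 : Defs.d2 (comp1 F) = fun p => - (chi1 L (snd p) * h1 (fst p)).
Proof.
  apply d2_eq. intros [x y]. unfold comp1, F, bent. simpl.
  eapply d_eq; [apply d_sub; [apply d_const|
    apply (d_mult (chi L) (fun _ => h1 x)); [apply chi_d; lra| apply d_const]] | ring].
Qed.
Lemma F_d12 : Defs.d1 (comp2 F) = fun p => h1 (fst p).
Proof.
  apply d1_eq. intros [x y]. unfold comp2, F, bent. simpl.
  eapply d_eq; [apply (d_plus (fun _ => y) h); [apply d_const| apply Hh0] | ring].
Qed.
Lemma F_d22 : Defs.d2 (comp2 F) = fun p => 1.
Proof.
  apply d2_eq. intros [x y]. unfold comp2, F, bent. simpl.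
  eapply d_eq; [apply (d_plus (fun t => t) (fun _ => h x)); [apply d_id| apply d_const] | ring].
Qed.

Lemma hess1 x : hess_sq (comp1 F) x =
  (- (chi L (snd x) * h3 (fst x))) ^ 2 + (- (chi1 L (snd x) * h2 (fst x))) ^ 2
  + (- (chi1 L (snd x) * h2 (fst x))) ^ 2 + (- (chi2 L (snd x) * h1 (fst x))) ^ 2.
Proof.
  unfold hess_sq. rewrite F_d11, F_d21.
  replace (Defs.d1 (fun p => 1 - chi L (snd p) * h2 (fst p)))
    with (fun p : pt => - (chi L (snd p) * h3 (fst p))).
  replace (Defs.d2 (fun p => 1 - chi L (snd p) * h2 (fst p)))
    with (fun p : pt => - (chi1 L (snd p) * h2 (fst p))).
  replace (Defs.d1 (fun p => - (chi1 L (snd p) * h1 (fst p))))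
    with (fun p : pt => - (chi1 L (snd p) * h2 (fst p))).
  replace (Defs.d2 (fun p => - (chi1 L (snd p) * h1 (fst p))))
    with (fun p : pt => - (chi2 L (snd p) * h1 (fst p))).
  { reflexivity. }
  all: symmetry; first [apply d1_eq | apply d2_eq]; intros [u y]; simpl.
  - eapply d_eq; [apply (is_derive_opp (fun t => chi1 L t * h1 u));
      apply (d_mult (chi1 L) (fun _ => h1 u)); [apply chi1_d; lra| apply d_const] |
      simpl; unfold opp; simpl; ring].
  - eapply d_eq; [apply (is_derive_opp (fun t => chi1 L y * h1 t)); apply d_cmul; apply Hh1 |
      simpl; unfold opp; simpl; ring].
  - eapply d_eq; [apply d_sub; [apply d_const|
      apply (d_mult (chi L) (fun _ => h2 u)); [apply chi_d; lra| apply d_const]] | ring].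
  - eapply d_eq; [apply d_sub; [apply d_const| apply d_cmul; apply Hh2] | ring].
Qed.

Lemma hess2 x : hess_sq (comp2 F) x = (h2 (fst x)) ^ 2 + 0 ^ 2 + 0 ^ 2 + 0 ^ 2.
Proof.
  unfold hess_sq. rewrite F_d12, F_d22.
  replace (Defs.d1 (fun p => h1 (fst p))) with (fun p : pt => h2 (fst p)).
  replace (Defs.d2 (fun p => h1 (fst p))) with (fun p : pt => 0).
  replace (Defs.d1 (fun p : pt => 1)) with (fun p : pt => 0).
  replace (Defs.d2 (fun p : pt => 1)) with (fun p : pt => 0).
  { reflexivity. }
  all: symmetry; first [apply d1_eq | apply d2_eq]; intros [u y]; simpl.
  - apply (d_const 1).
  - apply (d_const 1).
  - apply (d_const (h1 u)).
  - apply Hh1.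
Qed.

Lemma hess_entries x : Rabs (snd x) <= 2 * th * L ->
  Rabs (chi L (snd x) * h3 (fst x)) <= 120 * th ^ 2 /\
  Rabs (chi1 L (snd x) * h2 (fst x)) <= 27 * th ^ 2 /\
  Rabs (chi2 L (snd x) * h1 (fst x)) <= 36 * th ^ 2 /\
  Rabs (h2 (fst x)) <= 27 * th ^ 2.
Proof.
  intros Hy. assert (H0 : 0 < L) by lra. set (y := snd x) in *. set (u := fst x).
  assert (Hth2 := pow2_ge_0 th).
  assert (Hc : Rabs (chi L y) <= 2 * th * L) by (eapply Rle_trans; [apply chi_abs; lra|auto]).
  assert (Hc1 := chi1_bnd L H0 y).
  assert (Hc2 := chi2_small L H0 y ltac:(nra)).
  assert (HiL : 0 < / L) by (apply Rinv_0_lt_compat; lra).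
  replace (1 / L) with (/ L) in HLth by (field; lra).
  splits; rewrite ?Rabs_mult.
  - apply Rle_trans with (2 * th * L * (60 * th / L ^ 2)); [apply Rmult_le_compat; auto; apply Rabs_pos|].
    replace (2 * th * L * (60 * th / L ^ 2)) with (120 * th ^ 2 * / L) by (field; lra). nra.
  - apply Rle_trans with (1 * (27 * th / L)); [apply Rmult_le_compat; auto; apply Rabs_pos|].
    replace (1 * (27 * th / L)) with (27 * th * / L) by (field; lra). nra.
  - apply Rle_trans with (6 * (2 * th * L) / L ^ 2 * (3 * th)).
    + apply Rmult_le_compat; try apply Rabs_pos; auto.
      eapply Rle_trans; [apply Hc2|]. unfold Rdiv. apply Rmult_le_compat_r; [|lra].
      left; apply Rinv_0_lt_compat, pow_lt; lra.
    + replace (6 * (2 * th * L) / L ^ 2 * (3 * th)) with (36 * th ^ 2 * / L) by (field; lra). nra.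
  - eapply Rle_trans; [apply Hb2|]. replace (27 * th / L) with (27 * th * / L) by (field; lra). nra.
Qed.

Lemma hess_bnd x : Rabs (snd x) <= 2 * th * L -> d2norm F x <= 134 * th ^ 2.
Proof.
  intros Hy. destruct (hess_entries x Hy) as (E1 & E2 & E3 & E4).
  unfold d2norm. rewrite hess1, hess2. rewrite <- Rabs_Ropp in E1, E2, E3.
  apply sq_le in E1, E2, E3, E4. assert (Hth2 := pow2_ge_0 th).
  apply sqrt_le_of_sq; [|lra]. simpl (0 ^ 2).
  assert (0 <= (th ^ 2) ^ 2) by apply pow2_ge_0.
  replace ((120 * th ^ 2) ^ 2) with (14400 * (th ^ 2) ^ 2) in E1 by ring.
  replace ((27 * th ^ 2) ^ 2) with (729 * (th ^ 2) ^ 2) in E2, E4 by ring.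
  replace ((36 * th ^ 2) ^ 2) with (1296 * (th ^ 2) ^ 2) in E3 by ring.
  replace ((134 * th ^ 2) ^ 2) with (17956 * (th ^ 2) ^ 2) by ring.
  lra.
Qed.

Lemma chi1_near_one y : Rabs y <= 2 * th * L -> Rabs (1 - chi1 L y) <= 13 * th ^ 2.
Proof.
  intros Hy. assert (H0 : 0 < L) by lra. eapply Rle_trans; [apply one_minus_chi1; lra|].
  assert (Y2 : y ^ 2 <= 4 * th ^ 2 * L ^ 2).
  { replace (4 * th ^ 2 * L ^ 2) with ((2 * th * L) ^ 2) by ring. apply sq_le; auto. }
  assert (Y4 : y ^ 4 <= 16 * th ^ 4 * L ^ 4).
  { replace (y ^ 4) with ((y ^ 2) ^ 2) by ring.
    replace (16 * th ^ 4 * L ^ 4) with ((4 * th ^ 2 * L ^ 2) ^ 2) by ring.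
    apply pow_incr. split; [apply pow2_ge_0|auto]. }
  assert (HL2 : 0 < L ^ 2) by (apply pow_lt; lra).
  assert (HL4 : 0 < L ^ 4) by (apply pow_lt; lra).
  assert (3 * y ^ 2 / L ^ 2 <= 12 * th ^ 2).
  { apply (Rmult_le_reg_r (L ^ 2)); auto.
    replace (3 * y ^ 2 / L ^ 2 * L ^ 2) with (3 * y ^ 2) by (field; lra). nra. }
  assert (y ^ 4 / L ^ 4 <= th ^ 2).
  { apply (Rmult_le_reg_r (L ^ 4)); auto. replace (y ^ 4 / L ^ 4 * L ^ 4) with (y ^ 4) by (field; lra).
    assert (16 * th ^ 4 <= th ^ 2).
    { replace (th ^ 4) with (th ^ 2 * th ^ 2) by ring. assert (th ^ 2 <= 1/16) by (simpl; nra). nra. }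
    assert (16 * th ^ 4 * L ^ 4 <= th ^ 2 * L ^ 4) by (apply Rmult_le_compat_r; lra). lra. }
  lra.
Qed.

(* On the strip the Jacobian is O(th^2)-close to the rotation taking the
   horizontal direction to the tangent of the graph of h. *)
Lemma jac_bnd x : Rabs (snd x) <= 2 * th * L ->
  exists J, in_O2 J /\ mnorm (mdiff (jac F x) J) <= 66 * th ^ 2.
Proof.
  intros Hy. assert (H0 : 0 < L) by lra.
  set (u := h1 (fst x)). set (c := / sqrt (1 + u ^ 2)). set (s := u * c).
  destruct (rot_cos_facts u) as [[C1 C2] _]. fold c in C1, C2.
  exists (rot u). split; [apply rot_O2|].
  assert (Hth2 := pow2_ge_0 th).
  assert (Hu : Rabs u <= 3 * th) by apply Hb1.
  assert (Hu2 : u ^ 2 <= 9 * th ^ 2) by (replace (9 * th ^ 2) with ((3 * th) ^ 2) by ring; apply sq_le; auto).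
  assert (Hus : Rabs (u - s) <= th ^ 2).
  { unfold s. replace (u - u * c) with (u * (1 - c)) by ring. rewrite Rabs_mult, (Rabs_pos_eq (1 - c)) by lra.
    apply Rle_trans with (3 * th * (9 * th ^ 2)); [apply Rmult_le_compat; try apply Rabs_pos; lra|].
    assert (th * th <= th * (1/100)) by nra. simpl. nra. }
  assert (Hc : Rabs (chi L (snd x)) <= 2 * th * L) by (eapply Rle_trans; [apply chi_abs; lra|auto]).
  assert (Hchi1 := chi1_near_one (snd x) Hy).
  apply (mnorm_le _ (63 * th ^ 2) (14 * th ^ 2) (th ^ 2) (9 * th ^ 2)); [..|nra|nra];
    unfold mdiff, jac, rot; cbn [m11 m12 m21 m22]; rewrite ?F_d11, ?F_d21, ?F_d12, ?F_d22; fold u c s.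
  - replace (1 - chi L (snd x) * h2 (fst x) - c) with ((1 - c) - chi L (snd x) * h2 (fst x)) by ring.
    eapply Rle_trans; [apply Rabs_triang|]. rewrite Rabs_Ropp, (Rabs_pos_eq (1 - c)) by lra.
    rewrite Rabs_mult.
    assert (Rabs (chi L (snd x)) * Rabs (h2 (fst x)) <= 2 * th * L * (27 * th / L))
      by (apply Rmult_le_compat; try apply Rabs_pos; auto).
    replace (2 * th * L * (27 * th / L)) with (54 * th ^ 2) in H by (field; lra). lra.
  - replace (- (chi1 L (snd x) * u) - - s) with ((1 - chi1 L (snd x)) * u - (u - s)) by ring.
    eapply Rle_trans; [apply Rabs_triang|]. rewrite Rabs_Ropp, Rabs_mult.
    assert (Rabs (1 - chi1 L (snd x)) * Rabs u <= 13 * th ^ 2 * 1)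
      by (apply Rmult_le_compat; try apply Rabs_pos; lra).
    lra.
  - exact Hus.
  - rewrite Rabs_pos_eq; lra.
Qed.

(* The displacement p |-> F p - p is 1/2-Lipschitz, hence F is 2-bi-Lipschitz. *)
Lemma displacement_lip xp yp xq yq :
  sqrt ((- (chi L yp * h1 xp - chi L yq * h1 xq)) ^ 2 + (h xp - h xq) ^ 2)
  <= sqrt ((xp - xq) ^ 2 + (yp - yq) ^ 2) / 2.
Proof.
  assert (H0 : 0 < L) by lra.
  set (D := sqrt ((xp - xq) ^ 2 + (yp - yq) ^ 2)).
  assert (HD : 0 <= D) by apply sqrt_pos.
  assert (Hx : Rabs (xp - xq) <= D) by apply Rabs_le_sqrt.
  assert (Hy : Rabs (yp - yq) <= D) by (unfold D; rewrite Rplus_comm; apply Rabs_le_sqrt).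
  assert (Hh1d : Rabs (h1 xp - h1 xq) <= 27 * th / L * Rabs (xp - xq)) by (apply (mvt_bound h1 h2); auto).
  assert (Hchid : Rabs (chi L yp - chi L yq) <= 1 * Rabs (yp - yq)).
  { apply (mvt_bound (chi L) (chi1 L)); intros; [apply chi_d|apply chi1_bnd]; lra. }
  assert (Hhd : Rabs (h xp - h xq) <= 3 * th * Rabs (xp - xq)) by (apply (mvt_bound h h1); auto).
  assert (He1 : Rabs (chi L yp * h1 xp - chi L yq * h1 xq) <= 27 / 2 * th * D + 3 * th * D).
  { replace (chi L yp * h1 xp - chi L yq * h1 xq)
      with (chi L yp * (h1 xp - h1 xq) + h1 xq * (chi L yp - chi L yq)) by ring.
    eapply Rle_trans; [apply Rabs_triang|]. rewrite !Rabs_mult.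
    assert (Rabs (chi L yp) * Rabs (h1 xp - h1 xq) <= L / 2 * (27 * th / L * D)).
    { apply Rmult_le_compat; try apply Rabs_pos; [apply chi_bnd; lra|].
      eapply Rle_trans; [apply Hh1d|]. apply Rmult_le_compat_l; auto.
      apply Rdiv_le_0_compat; lra. }
    assert (Rabs (h1 xq) * Rabs (chi L yp - chi L yq) <= 3 * th * (1 * D))
      by (apply Rmult_le_compat; try apply Rabs_pos; auto; lra).
    replace (L / 2 * (27 * th / L * D)) with (27 / 2 * th * D) in H by (field; lra). lra. }
  assert (He2 : Rabs (h xp - h xq) <= 3 * th * D)
    by (eapply Rle_trans; [apply Hhd|]; apply Rmult_le_compat_l; lra).
  eapply Rle_trans; [apply sqrt_le_abs_sum|]. rewrite Rabs_Ropp. nra.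
Qed.

Lemma bilip p q : edist p q / 2 <= edist (F p) (F q) /\ edist (F p) (F q) <= 2 * edist p q.
Proof.
  destruct p as [xp yp]; destruct q as [xq yq].
  unfold edist, enorm, F, bent; cbn [fst snd].
  replace (xp - chi L yp * h1 xp - (xq - chi L yq * h1 xq))
    with ((xp - xq) + - (chi L yp * h1 xp - chi L yq * h1 xq)) by ring.
  replace (yp + h xp - (yq + h xq)) with ((yp - yq) + (h xp - h xq)) by ring.
  apply near_identity_bilip, displacement_lip.
Qed.
End Bounds.

(** * The binary family of profiles *)

Fixpoint sum_lt (f : nat -> R) (K : nat) : R :=
  match K with O => 0 | S k => sum_lt f k + f k end.

Lemma sum_lt_zero f K : (forall k, (k < K)%nat -> f k = 0) -> sum_lt f K = 0.
Proof. induction K; simpl; intros H; auto. rewrite IHK, H; [ring|lia|intros; apply H; lia]. Qed.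

Lemma sum_lt_single f K k0 : (k0 < K)%nat -> (forall k, k <> k0 -> f k = 0) -> sum_lt f K = f k0.
Proof.
  induction K; intros Hk H; [lia|]. simpl.
  destruct (Nat.eq_dec K k0).
  - subst. rewrite sum_lt_zero; [ring|]. intros; apply H; lia.
  - rewrite IHK; [|lia|auto]. rewrite (H K); auto. ring.
Qed.

Lemma sum_lt_abs_single f K k0 : (forall k, k <> k0 -> f k = 0) -> Rabs (sum_lt f K) <= Rabs (f k0).
Proof.
  intros H. destruct (Nat.lt_ge_cases k0 K).
  - rewrite (sum_lt_single f K k0); auto. lra.
  - rewrite sum_lt_zero; [rewrite Rabs_R0; apply Rabs_pos|]. intros; apply H; lia.
Qed.

Lemma sum_lt_sub f g K : sum_lt f K - sum_lt g K = sum_lt (fun k => f k - g k) K.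
Proof. induction K; simpl; [ring|]. rewrite <- IHK. ring. Qed.
Lemma sum_lt_scal c f K : c * sum_lt f K = sum_lt (fun k => c * f k) K.
Proof. induction K; simpl; [ring|]. rewrite <- IHK. ring. Qed.

Lemma sum_lt_derive (f f' : nat -> R -> R) K x : (forall k, is_derive (f k) x (f' k x)) ->
  is_derive (fun t => sum_lt (fun k => f k t) K) x (sum_lt (fun k => f' k x) K).
Proof.
  intros H. induction K; simpl; [apply d_const|].
  apply (d_plus (fun t => sum_lt (fun k => f k t) K) (f K)); auto.
Qed.
Lemma sum_lt_continuous (f : nat -> R -> R) K x : (forall k, continuous (f k) x) ->
  continuous (fun t => sum_lt (fun k => f k t) K) x.
Proof.
  intros H. induction K; simpl; [apply continuous_const|].
  apply (continuous_plus (fun t => sum_lt (fun k => f k t) K) (f K)); auto.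
Qed.

Definition bit (i k : nat) : R := if Nat.testbit i k then 1 else 0.

Lemma bit_01 i k : 0 <= bit i k <= 1.
Proof. unfold bit. destruct (Nat.testbit i k); lra. Qed.

Section Profiles.
Variables (L Ra : R) (K i : nat).
Hypothesis HL : 0 < L.

Definition bumps (g : R -> R) (x : R) := sum_lt (fun k => bit i k * g (x / L - INR k)) K.

Lemma bumps_derive g g' x : (forall t, is_derive g t (g' t)) -> is_derive (bumps g) x (/ L * bumps g' x).
Proof.
  intros Hg. unfold bumps. rewrite sum_lt_scal.
  apply (sum_lt_derive (fun k t => bit i k * g (t / L - INR k))
           (fun k t => / L * (bit i k * g' (t / L - INR k)))).
  intros k. assert (Hlin : is_derive (fun t => t / L - INR k) x (/ L)) by (auto_derive; auto; field; lra).
  eapply d_eq; [apply d_cmul, (d_comp g (fun t => t / L - INR k)); [apply Hg|apply Hlin]|ring].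
Qed.

Lemma bumps_continuous g x : (forall t, continuous g t) -> continuous (bumps g) x.
Proof.
  intros Hg. apply (sum_lt_continuous (fun k t => bit i k * g (t / L - INR k))). intros k.
  apply (continuous_mult (fun _ => bit i k) (fun t => g (t / L - INR k))); [apply continuous_const|].
  apply (continuous_comp (fun t => t / L - INR k) g); auto.
  apply (ex_derive_continuous (fun t => t / L - INR k)). auto_derive; auto.
Qed.

(* The bumps have disjoint supports, so they add no size. *)
Lemma bumps_bound g A x : (forall t, t <= 0 \/ 1 <= t -> g t = 0) -> (forall t, Rabs (g t) <= A) ->
  Rabs (bumps g x) <= A.
Proof.
  intros Hz Hb. unfold bumps.
  assert (Hex : exists k0 : nat, forall k, k <> k0 -> bit i k * g (x / L - INR k) = 0).
  { destruct (Rlt_or_le (x / L) 0) as [Hn|Hp].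
    - exists 0%nat. intros k _. rewrite Hz; [ring|]. left. generalize (pos_INR k). lra.
    - destruct (nfloor_ex (x / L) Hp) as [n [Hn1 Hn2]]. exists n. intros k Hk. rewrite Hz; [ring|].
      destruct (Nat.lt_ge_cases k n).
      + right. assert (INR k + 1 <= INR n) by (rewrite <- S_INR; apply le_INR; lia). lra.
      + left. assert (INR n + 1 <= INR k) by (rewrite <- S_INR; apply le_INR; lia). lra. }
  destruct Hex as [k0 Hk0].
  eapply Rle_trans; [apply (sum_lt_abs_single _ K k0 Hk0)|].
  rewrite Rabs_mult. rewrite <- (Rmult_1_l A). apply Rmult_le_compat; try apply Rabs_pos; auto.
  destruct (bit_01 i k0). rewrite Rabs_pos_eq; lra.
Qed.

Definition prof0 x := Ra * bumps s0 x.
Definition prof1 x := Ra / L * bumps s1 x.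
Definition prof2 x := Ra / L ^ 2 * bumps s2 x.
Definition prof3 x := Ra / L ^ 3 * bumps s3 x.

Lemma prof0_d x : is_derive prof0 x (prof1 x).
Proof. unfold prof0, prof1. eapply d_eq; [apply d_cmul, bumps_derive, s0_d|field; lra]. Qed.
Lemma prof1_d x : is_derive prof1 x (prof2 x).
Proof. unfold prof1, prof2. eapply d_eq; [apply d_cmul, bumps_derive, s1_d|field; lra]. Qed.
Lemma prof2_d x : is_derive prof2 x (prof3 x).
Proof. unfold prof2, prof3. eapply d_eq; [apply d_cmul, bumps_derive, s2_d|field; lra]. Qed.
Lemma prof3_c x : continuous prof3 x.
Proof.
  apply (continuous_mult (fun _ => Ra / L ^ 3) (bumps s3)); [apply continuous_const|].
  apply bumps_continuous, s3_c.
Qed.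

Lemma prof0_0 : prof0 0 = 0.
Proof.
  unfold prof0, bumps. rewrite sum_lt_zero; [ring|]. intros k _. rewrite s0_neg; [ring|].
  unfold Rdiv. rewrite Rmult_0_l. generalize (pos_INR k). lra.
Qed.

Hypothesis HRa : 0 < Ra.

Lemma prof1_bnd x : Rabs (prof1 x) <= 3 * (Ra / L).
Proof.
  unfold prof1. rewrite Rabs_mult, Rabs_pos_eq by (apply Rdiv_le_0_compat; lra).
  rewrite Rmult_comm. apply Rmult_le_compat_r; [apply Rdiv_le_0_compat; lra|].
  apply bumps_bound; [apply s1_out|apply s1_bnd].
Qed.
Lemma prof2_bnd x : Rabs (prof2 x) <= 27 * (Ra / L) / L.
Proof.
  assert (0 < L ^ 2) by (apply pow_lt; lra).
  unfold prof2. rewrite Rabs_mult, Rabs_pos_eq by (apply Rdiv_le_0_compat; lra).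
  replace (27 * (Ra / L) / L) with (Ra / L ^ 2 * 27) by (field; lra).
  apply Rmult_le_compat_l; [apply Rdiv_le_0_compat; lra|].
  apply bumps_bound; [apply s2_out|apply s2_bnd].
Qed.
Lemma prof3_bnd x : Rabs (prof3 x) <= 60 * (Ra / L) / L ^ 2.
Proof.
  assert (0 < L ^ 3) by (apply pow_lt; lra).
  unfold prof3. rewrite Rabs_mult, Rabs_pos_eq by (apply Rdiv_le_0_compat; lra).
  replace (60 * (Ra / L) / L ^ 2) with (Ra / L ^ 3 * 60) by (field; lra).
  apply Rmult_le_compat_l; [apply Rdiv_le_0_compat; lra|].
  apply bumps_bound; [apply s3_out|apply s3_bnd].
Qed.
End Profiles.

Definition member (L Ra : R) (K i : nat) : pt -> pt := bent L (prof0 L Ra K i) (prof1 L Ra K i).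

(** * Crossing paths *)

Lemma div_le_iff (x c L : R) : 0 < L -> (x / L <= c <-> x <= c * L).
Proof.
  intros HL. split; intros H.
  - apply (Rmult_le_compat_r L) in H; [|lra]. replace (x / L * L) with x in H by (field; lra). lra.
  - apply (Rmult_le_reg_r L); auto. replace (x / L * L) with x by (field; lra). lra.
Qed.
Lemma div_ge_iff (x c L : R) : 0 < L -> (c <= x / L <-> c * L <= x).
Proof.
  intros HL. split; intros H.
  - apply (Rmult_le_compat_r L) in H; [|lra]. replace (x / L * L) with x in H by (field; lra). lra.
  - apply (Rmult_le_reg_r L); auto. replace (x / L * L) with x by (field; lra). lra.
Qed.

Section Crossing.
Variables (L Ra Rr : R) (K i j k0 : nat).
Hypothesis HL : 0 < L.
Hypothesis HRa : 0 < Ra.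
Hypothesis Hk0 : (k0 < K)%nat.
Hypothesis HKR : INR K * L <= Rr.
Hypothesis Hlow : forall k, (k < k0)%nat -> Nat.testbit i k = Nat.testbit j k.
Hypothesis Hi : Nat.testbit i k0 = true.
Hypothesis Hj : Nat.testbit j k0 = false.

Let T := (INR k0 + 1) * L.

Lemma profile_split x : x <= T -> prof0 L Ra K i x = prof0 L Ra K j x + Ra * s0 (x / L - INR k0).
Proof.
  intros Hx. unfold prof0, bumps.
  assert (E : Ra * sum_lt (fun k => bit i k * s0 (x / L - INR k)) K
              - Ra * sum_lt (fun k => bit j k * s0 (x / L - INR k)) K = Ra * s0 (x / L - INR k0)).
  { rewrite <- Rmult_minus_distr_l, sum_lt_sub. f_equal.
    rewrite (sum_lt_single _ K k0); auto.
    - unfold bit. rewrite Hi, Hj. ring.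
    - intros k Hk. destruct (Nat.lt_ge_cases k k0).
      + unfold bit. rewrite Hlow; auto. ring.
      + rewrite s0_neg; [ring|]. apply div_le_iff in Hx; auto.
        assert (INR k0 + 1 <= INR k) by (rewrite <- S_INR; apply le_INR; lia). lra. }
  lra.
Qed.

Lemma profile_flat x : INR k0 * L <= x <= T -> prof1 L Ra K j x = 0.
Proof.
  intros [Hx1 Hx2]. unfold prof1, bumps. rewrite sum_lt_zero; [ring|].
  intros k Hk. destruct (Nat.lt_ge_cases k k0).
  - rewrite s1_out; [ring|]. right. apply div_ge_iff in Hx1; auto.
    assert (INR k + 1 <= INR k0) by (rewrite <- S_INR; apply le_INR; lia). lra.
  - destruct (Nat.eq_dec k k0).
    + subst. unfold bit. rewrite Hj. ring.
    + rewrite s1_out; [ring|]. left. apply div_le_iff in Hx2; auto.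
      assert (INR k0 + 1 <= INR k) by (rewrite <- S_INR; apply le_INR; lia). lra.
Qed.

(* The image of [0, T] x {0} under F_i lies in F_j([0, T] x [0, Ra]): before k0 L
   both maps agree on the axis, and on the k0-th interval F_i (x, 0) is the point
   of F_j above (x, 0) at height Ra s0, reaching F_j([0,R] x {Ra}) at x = T. *)
Lemma member_on_axis x : 0 <= x <= T ->
  member L Ra K i (x, 0) = member L Ra K j (x, Ra * s0 (x / L - INR k0)).
Proof.
  intros Hx. assert (chi0 : chi L 0 = 0) by (apply chi_0; lra).
  unfold member, bent; simpl. f_equal.
  - destruct (Rle_dec x (INR k0 * L)) as [Hle|Hgt].
    + rewrite s0_neg; [rewrite Rmult_0_r, chi0; ring|]. apply div_le_iff in Hle; auto. lra.
    + rewrite profile_flat; [rewrite chi0; ring|lra].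
  - rewrite (profile_split x); [ring|lra].
Qed.

Lemma crossing_path :
  path_from0_to (fun q => img (member L Ra K i) (rect 0 Rr 0 0) q /\
                          img (member L Ra K j) (rect 0 Rr 0 Ra) q)
                (img (member L Ra K j) (rect 0 Rr Ra Ra)).
Proof.
  assert (HT0 : 0 < T) by (unfold T; generalize (pos_INR k0); nra).
  assert (HTR : T <= Rr).
  { unfold T. apply Rle_trans with (INR K * L); auto. apply Rmult_le_compat_r; [lra|].
    rewrite <- S_INR. apply le_INR. lia. }
  assert (chi0 : chi L 0 = 0) by (apply chi_0; lra).
  exists (fun t => member L Ra K i (t * T, 0)).
  assert (Hc0 : forall t, continuous (prof0 L Ra K i) t)
    by (intros; apply (cont_of_d _ (prof1 L Ra K i)); apply prof0_d; lra).
  assert (Hc1 : forall t, continuous (prof1 L Ra K i) t)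
    by (intros; apply (cont_of_d _ (prof2 L Ra K i)); apply prof1_d; lra).
  assert (HlinT : forall t, continuous (fun s => s * T) t)
    by (intros r; apply (ex_derive_continuous (fun s => s * T)); auto_derive; auto).
  splits.
  - intros t _ eps Heps.
    destruct (path_continuous (fun s => s * T - chi L 0 * prof1 L Ra K i (s * T))
                (fun s => 0 + prof0 L Ra K i (s * T))) with t eps as [del [Hdel H]]; auto.
    + intros s. apply (continuous_minus (fun s => s * T) (fun s => chi L 0 * prof1 L Ra K i (s * T))); auto.
      apply (continuous_mult (fun _ => chi L 0) (fun s => prof1 L Ra K i (s * T))); [apply continuous_const|].
      apply (continuous_comp (fun s => s * T) (prof1 L Ra K i)); auto.
    + intros s. apply (continuous_plus (fun _ => 0) (fun s => prof0 L Ra K i (s * T))); [apply continuous_const|].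
      apply (continuous_comp (fun s => s * T) (prof0 L Ra K i)); auto.
    + exists del. split; auto. intros s _ Hs. apply H. auto.
  - intros t Ht. assert (HtT : 0 <= t * T <= T) by (split; nra). split.
    + exists (t * T, 0). split; auto. unfold rect; simpl. lra.
    + exists (t * T, Ra * s0 (t * T / L - INR k0)). rewrite member_on_axis by auto. split; auto.
      unfold rect; simpl. destruct (s0_bnd (t * T / L - INR k0)). splits; nra.
  - unfold member, bent; simpl. rewrite Rmult_0_l, chi0, prof0_0. f_equal; ring.
  - exists (T, Ra). split; [unfold rect; simpl; lra|].
    rewrite Rmult_1_l, member_on_axis by lra. unfold T.
    replace ((INR k0 + 1) * L / L - INR k0) with 1 by (field; lra). rewrite s0_one by lra.
    rewrite Rmult_1_r. reflexivity.
Qed.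
End Crossing.

Lemma member_diffeo L Ra K i S : 1 <= L -> 0 < Ra -> Ra / L <= 1/100 ->
  C2_diffeo_onto_image S (member L Ra K i) /\ member L Ra K i (0, 0) = (0, 0).
Proof.
  intros HL HRa Hth. assert (HL0 : 0 < L) by lra.
  assert (Hth0 : 0 < Ra / L) by (apply Rdiv_lt_0_compat; lra).
  split.
  - apply (bent_diffeo L (3 * (Ra / L)) (27 * (Ra / L) / L) _ _ (prof2 L Ra K i) (prof3 L Ra K i));
      auto using prof0_d, prof1_d, prof2_d, prof3_c, prof1_bnd, prof2_bnd; try lra.
    replace (L * (27 * (Ra / L) / L)) with (27 * (Ra / L)) by (field; lra). lra.
  - unfold member, bent; simpl. rewrite chi_0, prof0_0 by lra. f_equal; ring.
Qed.

Lemma member_geometry L Ra K i x : 1 <= L -> 1 <= Ra -> Ra / L <= 1/100 ->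
  strip (- Ra) (2 * Ra) x ->
  d2norm (member L Ra K i) x <= 134 * (Ra / L) ^ 2 /\
  (exists J : mat2, in_O2 J /\ mnorm (mdiff (jac (member L Ra K i) x) J) <= 66 * (Ra / L) ^ 2) /\
  (forall y, edist x y / 2 <= edist (member L Ra K i x) (member L Ra K i y) /\
             edist (member L Ra K i x) (member L Ra K i y) <= 2 * edist x y).
Proof.
  intros HL HRa Hth Hx. assert (HL0 : 0 < L) by lra. assert (HRa0 : 0 < Ra) by lra.
  assert (Hth0 : 0 < Ra / L <= 1/100) by (split; [apply Rdiv_lt_0_compat|]; lra).
  assert (HLth : 1 / L <= Ra / L)
    by (unfold Rdiv; apply Rmult_le_compat_r; [left; apply Rinv_0_lt_compat|]; lra).
  assert (Hy : Rabs (snd x) <= 2 * (Ra / L) * L).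
  { replace (2 * (Ra / L) * L) with (2 * Ra) by (field; lra). unfold strip in Hx. apply Rabs_le; lra. }
  splits.
  - apply (hess_bnd L (Ra / L) _ _ (prof2 L Ra K i) (prof3 L Ra K i));
      auto using prof0_d, prof1_d, prof2_d, prof1_bnd, prof2_bnd, prof3_bnd; lra.
  - apply (jac_bnd L (Ra / L) _ _ (prof2 L Ra K i));
      auto using prof0_d, prof1_d, prof1_bnd, prof2_bnd; lra.
  - intros y. apply (bilip L (Ra / L) _ _ (prof2 L Ra K i));
      auto using prof0_d, prof1_d, prof1_bnd, prof2_bnd; lra.
Qed.

Lemma min_nat (P : nat -> Prop) n : P n -> exists m, P m /\ forall k, (k < m)%nat -> ~ P k.
Proof.
  revert P. induction n as [n IH] using (well_founded_induction Wf_nat.lt_wf). intros P Hn.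
  destruct (classic (exists k, (k < n)%nat /\ P k)) as [[k [Hk Pk]]|Hno].
  - apply (IH k Hk P Pk).
  - exists n. split; auto. intros k Hk Pk. apply Hno. exists k; auto.
Qed.

Lemma bits_first_difference i j K : (i < 2 ^ K)%nat -> (j < 2 ^ K)%nat -> i <> j ->
  exists k0, (k0 < K)%nat /\ (forall k, (k < k0)%nat -> Nat.testbit i k = Nat.testbit j k) /\
    Nat.testbit i k0 <> Nat.testbit j k0.
Proof.
  intros Hi Hj Hij.
  assert (Hhigh : forall m n, (m < 2 ^ K)%nat -> (K <= n)%nat -> Nat.testbit m n = false).
  { intros m n Hm Hn. rewrite <- (Nat.mod_small m (2 ^ K)) by auto. apply Nat.mod_pow2_bits_high; auto. }
  assert (Hex : exists n, Nat.testbit i n <> Nat.testbit j n).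
  { apply NNPP. intros Hno. apply Hij. apply Nat.bits_inj. intros n.
    apply NNPP. intros Hn. apply Hno. exists n. auto. }
  destruct Hex as [n Hn].
  destruct (min_nat (fun m => Nat.testbit i m <> Nat.testbit j m) n Hn) as [m [Hm Hmin]].
  exists m. splits; auto.
  - destruct (Nat.lt_ge_cases m K); auto. exfalso. apply Hm. rewrite !Hhigh; auto.
  - intros k Hk. apply NNPP. intros Hne. apply (Hmin k Hk). auto.
Qed.

Lemma members_cross L Ra Rr K i j : 0 < L -> 0 < Ra -> INR K * L <= Rr ->
  (i < 2 ^ K)%nat -> (j < 2 ^ K)%nat -> i <> j ->
  path_from0_to (fun q => img (member L Ra K i) (rect 0 Rr 0 0) q /\
                          img (member L Ra K j) (rect 0 Rr 0 Ra) q)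
                (img (member L Ra K j) (rect 0 Rr Ra Ra)) \/
  path_from0_to (fun q => img (member L Ra K j) (rect 0 Rr 0 0) q /\
                          img (member L Ra K i) (rect 0 Rr 0 Ra) q)
                (img (member L Ra K i) (rect 0 Rr Ra Ra)).
Proof.
  intros HL HRa HKR Hi Hj Hij.
  destruct (bits_first_difference i j K Hi Hj Hij) as [k0 [Hk0 [Hlow Hne]]].
  destruct (Nat.testbit i k0) eqn:Ei; destruct (Nat.testbit j k0) eqn:Ej; try congruence.
  - left. exact (crossing_path L Ra Rr K i j k0 HL HRa Hk0 HKR Hlow Ei Ej).
  - right. exact (crossing_path L Ra Rr K j i k0 HL HRa Hk0 HKR (fun k Hk => eq_sym (Hlow k Hk)) Ej Ei).
Qed.

(** * Choice of the parameters *)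

Lemma count_bound (T : R) (K : nat) : 2 <= T -> INR K <= T < INR K + 1 ->
  exp (ln 2 / 2 * T) <= INR (2 ^ K).
Proof.
  intros HT [HK1 HK2]. assert (Hln2 : 0 < ln 2) by (rewrite <- ln_1; apply ln_increasing; lra).
  rewrite pow_INR. replace (INR 2) with 2 by (simpl; ring).
  rewrite <- Rpower_pow by lra. unfold Rpower.
  assert (T / 2 <= INR K) by lra.
  destruct (Rle_lt_or_eq_dec _ _ (ltac:(nra) : ln 2 / 2 * T <= INR K * ln 2)) as [Hlt|Heq];
    [left; apply exp_increasing, Hlt | rewrite Heq; lra].
Qed.

Lemma Rpower_ge1 x y : 1 <= x -> 0 <= y -> 1 <= Rpower x y.
Proof. intros. rewrite <- (Rpower_O x) by lra. apply Rle_Rpower; auto. Qed.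

Lemma Rpower_big (P x c : R) : 0 < c -> 0 < P -> Rpower P (/ c) <= x -> P <= Rpower x c.
Proof.
  intros Hc HP H.
  assert (Hp : 0 < Rpower P (/ c)) by (unfold Rpower; apply exp_pos).
  apply Rle_trans with (Rpower (Rpower P (/ c)) c).
  - rewrite Rpower_mult. replace (/ c * c) with 1 by (field; lra). rewrite Rpower_1; lra.
  - apply Rle_Rpower_l; lra.
Qed.

Lemma Rpower_ratio x p q : Rpower x p / Rpower x q = Rpower x (p - q).
Proof. unfold Rminus, Rdiv. rewrite Rpower_plus, Rpower_Ropp. reflexivity. Qed.

Lemma admissible_scales (a b : R) : 0 < a < b -> b < 1 -> exists R0, 0 < R0 /\
  forall Rr, R0 <= Rr ->
    1 <= Rpower Rr a /\ 1 <= Rpower Rr b /\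
    Rpower Rr a / Rpower Rr b <= 1/100 /\ 2 <= Rr / Rpower Rr b.
Proof.
  intros [Ha Hab] Hb.
  set (P100 := Rpower 100 (/ (b - a))). set (P2 := Rpower 2 (/ (1 - b))).
  assert (HP100 : 0 < P100) by (unfold P100, Rpower; apply exp_pos).
  assert (HP2 : 0 < P2) by (unfold P2, Rpower; apply exp_pos).
  exists (1 + P100 + P2). split; [lra|]. intros Rr HR. splits; try (apply Rpower_ge1; lra).
  - rewrite Rpower_ratio. replace (a - b) with (- (b - a)) by ring. rewrite Rpower_Ropp.
    assert (100 <= Rpower Rr (b - a)) by (apply Rpower_big; [lra|lra|fold P100; lra]).
    replace (1 / 100) with (/ 100) by field. apply Rinv_le_contravar; lra.
  - rewrite <- (Rpower_1 Rr) at 1 by lra. rewrite Rpower_ratio.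
    apply Rpower_big; [lra|lra|fold P2; lra].
Qed.

Theorem lemma3p1 (a b : R) (hab : 0 < a /\ a < b /\ b < 1) :
  exists c1 c2 c3 c4 R0 : R,
    0 < c1 /\ 0 < c2 /\ 0 < c3 /\ 0 < c4 /\ 0 < R0 /\
    forall Rr : R, R0 <= Rr ->
      let Ra := Rpower Rr a in
      let S := strip (- Ra) (2 * Ra) in
      exists (N : nat) (F : nat -> pt -> pt),
        (forall i, (i < N)%nat ->
           C2_diffeo_onto_image S (F i) /\ F i (0, 0) = (0, 0)) /\
        (* 1 *)
        exp (c1 * Rpower Rr (1 - b)) <= INR N /\
        (* 2 *)
        (forall i j, (i < N)%nat -> (j < N)%nat -> i <> j ->
           path_from0_to
             (fun q => img (F i) (rect 0 Rr 0 0) q /\ img (F j) (rect 0 Rr 0 Ra) q)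
             (img (F j) (rect 0 Rr Ra Ra))
           \/
           path_from0_to
             (fun q => img (F j) (rect 0 Rr 0 0) q /\ img (F i) (rect 0 Rr 0 Ra) q)
             (img (F i) (rect 0 Rr Ra Ra))) /\
        (* 3 *)
        (forall i x, (i < N)%nat -> S x ->
           d2norm (F i) x <= c2 * Rpower Rr (2 * (a - b)) /\
           (exists J : mat2, in_O2 J /\
              mnorm (mdiff (jac (F i) x) J) <= c3 * Rpower Rr (2 * (a - b))) /\
           (forall y, S y ->
              edist x y / c4 <= edist (F i x) (F i y) /\
              edist (F i x) (F i y) <= c4 * edist x y)).
Proof.
  destruct hab as [Ha [Hab Hb]].
  destruct (admissible_scales a b ltac:(lra) Hb) as [R0 [HR0 Hscales]].
  assert (Hln2 : 0 < ln 2) by (rewrite <- ln_1; apply ln_increasing; lra).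
  exists (ln 2 / 2), 134, 66, 2, R0. splits; try lra.
  intros Rr HR Ra S.
  (* Scales: L = R^b, th = Ra / L = R^(a-b), K = floor (R / L) = floor R^(1-b). *)
  set (L := Rpower Rr b). destruct (Hscales Rr HR) as (HRa & HL & Hth & HT). fold Ra L in HRa, HL, Hth, HT.
  destruct (nfloor_ex (Rr / L) ltac:(lra)) as [K HK].
  assert (HKR : INR K * L <= Rr) by (apply div_ge_iff; lra).
  assert (Hsq : Rpower Rr (2 * (a - b)) = (Ra / L) ^ 2).
  { unfold Ra, L. rewrite Rpower_ratio. replace (2 * (a - b)) with ((a - b) + (a - b)) by ring.
    rewrite Rpower_plus. ring. }
  assert (HTb : Rr / L = Rpower Rr (1 - b))
    by (unfold L; rewrite <- Rpower_ratio, Rpower_1 by lra; reflexivity).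
  exists (2 ^ K)%nat, (member L Ra K). rewrite Hsq, <- HTb. splits.
  - intros i _. apply member_diffeo; lra.
  - apply count_bound; lra.
  - intros i j Hi Hj Hij. apply members_cross; auto; lra.
  - intros i x _ Hx. destruct (member_geometry L Ra K i x HL HRa Hth Hx) as (G1 & G2 & G3).
    splits; auto.
Qed.
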